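(* Let $F$ be a smooth strictly convex closed curve in the plane, traversed once, and let $r$ be the radius of its smallest osculating circle (i.e. $r=1/k_{\max}$, where $k_{\max}$ is the maximum curvature of $F$). If $\ell<r$, then the bicycle monodromy $M_F$ for the bicycle of length $\ell$ is hyperbolic.
   Context: Bicycle model: a segment $RF$ of fixed length $\ell$ moves in the plane ($F$ = front wheel, $R$ = rear wheel) subject to the constraint that the velocity of $R$ is always parallel to $RF$. For a closed front path, the bicycle monodromy $M_F$ is the self-map of the circle of radius $\ell$ sending the initial position of $R$ relative to $F$ to its terminal position; it is a Möbius transformation, called hyperbolic if it has two fixed points (one attracting, one repelling). *)

From Stdlib Require Import Reals Lra ClassicalEpsilon.
From Coquelicot Require Import Coquelicot.
Open Scope R_scope.

Definition smooth (f : R -> R) : Prop := forall (n : nat) (t : R), ex_derive_n f n t.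

Definition smooth_closed_curve (x y : R -> R) (T : R) : Prop :=
  0 < T /\ smooth x /\ smooth y /\
  (forall t, x (t + T) = x t /\ y (t + T) = y t) /\
  (forall t, Derive x t <> 0 \/ Derive y t <> 0).

Definition traversed_once (x y : R -> R) (T : R) : Prop :=
  forall s t, 0 <= s < T -> 0 <= t < T -> x s = x t -> y s = y t -> s = t.

(* strict convexity: at every point, every other point of the curve lies
   strictly on one (fixed) side of the tangent line *)
Definition strictly_convex (x y : R -> R) : Prop :=
  exists sigma : R, (sigma = 1 \/ sigma = -1) /\
    forall t s, (x s <> x t \/ y s <> y t) ->
      0 < sigma * (Derive x t * (y s - y t) - Derive y t * (x s - x t)).

Definition curvature (x y : R -> R) (t : R) : R :=
  let v2 := Derive x t ^ 2 + Derive y t ^ 2 in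
  Rabs (Derive x t * Derive_n y 2 t - Derive y t * Derive_n x 2 t) / (v2 * sqrt v2).

(* Rear wheel position when the unit vector from R to F is (cos th, sin th). *)
Definition rear_x (x : R -> R) (l : R) (th : R -> R) (t : R) : R := x t - l * cos (th t).
Definition rear_y (y : R -> R) (l : R) (th : R -> R) (t : R) : R := y t - l * sin (th t).

(* bicycle motion: |RF| = l (built in), th differentiable, and the velocity of R
   is parallel to RF = l (cos th, sin th). *)
Definition bicycle_motion (x y : R -> R) (l : R) (th : R -> R) : Prop :=
  (forall t, ex_derive th t) /\
  forall t, Derive (rear_x x l th) t * sin (th t)
            - Derive (rear_y y l th) t * cos (th t) = 0.

(* monodromy (in the angle coordinate th on the circle of radius l around F):
   initial angle th0 at time 0 |-> terminal angle at time T *)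
Definition monodromy_rel (x y : R -> R) (l T th0 th1 : R) : Prop :=
  exists th : R -> R, bicycle_motion x y l th /\ th 0 = th0 /\ th T = th1.

Definition monodromy (x y : R -> R) (l T : R) (th0 : R) : R :=
  epsilon (inhabits 0) (fun th1 => monodromy_rel x y l T th0 th1).

Definition circle_fixed (M : R -> R) (a : R) : Prop :=
  exists k : Z, M a = a + 2 * PI * IZR k.

Definition hyperbolic (M : R -> R) : Prop :=
  exists a b : R, 0 <= a < 2 * PI /\ 0 <= b < 2 * PI /\ a <> b /\
    circle_fixed M a /\ circle_fixed M b /\
    (forall c, 0 <= c < 2 * PI -> circle_fixed M c -> c = a \/ c = b) /\
    ex_derive M a /\ ex_derive M b /\
    Rabs (Derive M a) < 1 /\ 1 < Rabs (Derive M b).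

From Stdlib Require Import Reals Lra Lia ClassicalEpsilon ZArith FunctionalExtensionality.
From Coquelicot Require Import Coquelicot.
Open Scope R_scope.

(* Writing [RF = l (cos th, sin th)], the bicycle equation is the ODE
   [l th' = y' cos th - x' sin th]; its time-[T] map is an increasing lift [M] of the monodromy
   with [M (c + 2 PI) = M c + 2 PI]. The derivative of [M] is [exp (- 1/l * int_0^T w)], where [w]
   is the projection of the front velocity on [RF]. Since the curvature is less than [1/l], [w]
   can only cross zero upwards, so [M' < 1] when [w(0) >= 0] and [M' > 1] when [w(T) <= 0].
   Hence [M - id] decreases strictly on the arc of initial angles where [w(0) >= 0], which [M]
   maps into a translate of itself, and increases strictly where [w(T) <= 0]; with the
   intermediate value theorem this yields exactly one fixed point modulo [2 PI] on each of the
   two complementary arcs, attracting and repelling respectively. *)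

(** * Elementary real analysis *)

Lemma is_derive_eq_val (f : R -> R) (x l l' : R) : is_derive f x l -> l = l' -> is_derive f x l'.
Proof. now intros H <-. Qed.

Lemma is_derive_plus_R (f g : R -> R) (x a b : R) : is_derive f x a -> is_derive g x b ->
  is_derive (fun t => f t + g t) x (a + b).
Proof. apply (is_derive_plus f g x a b). Qed.

Lemma is_derive_minus_R (f g : R -> R) (x a b : R) : is_derive f x a -> is_derive g x b ->
  is_derive (fun t => f t - g t) x (a - b).
Proof. apply (is_derive_minus f g x a b). Qed.

Lemma is_derive_opp_R (f : R -> R) (x a : R) : is_derive f x a -> is_derive (fun t => - f t) x (- a).
Proof. apply (is_derive_opp f x a). Qed.

Lemma is_derive_mult_R (f g : R -> R) (x a b : R) : is_derive f x a -> is_derive g x b ->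
  is_derive (fun t => f t * g t) x (a * g x + f x * b).
Proof. intros; apply (is_derive_mult f g x a b); auto. intros; apply Rmult_comm. Qed.

Lemma is_derive_const_R (c x : R) : is_derive (fun _ => c) x 0.
Proof. apply (is_derive_const c x). Qed.

Lemma is_derive_id_R (x : R) : is_derive (fun t => t) x 1.
Proof. apply (is_derive_id x). Qed.

Lemma is_derive_cos_comp (f : R -> R) (x a : R) :
  is_derive f x a -> is_derive (fun t => cos (f t)) x (- sin (f x) * a).
Proof.
  intros H. rewrite Rmult_comm. exact (is_derive_comp cos f x _ _ (is_derive_cos (f x)) H).
Qed.

Lemma is_derive_sin_comp (f : R -> R) (x a : R) :
  is_derive f x a -> is_derive (fun t => sin (f t)) x (cos (f x) * a).
Proof.
  intros H. rewrite Rmult_comm. exact (is_derive_comp sin f x _ _ (is_derive_sin (f x)) H).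
Qed.

Lemma is_derive_exp_comp (f : R -> R) (x a : R) :
  is_derive f x a -> is_derive (fun t => exp (f t)) x (exp (f x) * a).
Proof.
  intros H. rewrite Rmult_comm. exact (is_derive_comp exp f x _ _ (is_derive_exp (f x)) H).
Qed.

Lemma is_derive_scal_lin (k x : R) : is_derive (fun t => k * t) x k.
Proof.
  eapply is_derive_eq_val; [apply (is_derive_scal (fun t => t)), is_derive_id_R | ring].
Qed.

Lemma is_derive_exp_lin (k x : R) : is_derive (fun t => exp (k * t)) x (exp (k * x) * k).
Proof. apply (is_derive_exp_comp (fun t => k * t)), is_derive_scal_lin. Qed.

Lemma deriv_nonpos_le (h dh : R -> R) a b : a <= b ->
  (forall s, a <= s <= b -> is_derive h s (dh s)) ->
  (forall s, a <= s <= b -> dh s <= 0) -> h b <= h a.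
Proof.
  intros Hab Hd Hs. destruct (Req_dec a b) as [<-|Hne]; [lra|].
  destruct (MVT_cor2 h dh a b) as [c [Hc1 Hc2]]; [lra| |].
  - intros c Hc. apply is_derive_Reals, Hd; lra.
  - assert (dh c <= 0) by (apply Hs; lra). nra.
Qed.

Lemma deriv_nonneg_le (h dh : R -> R) a b : a <= b ->
  (forall s, a <= s <= b -> is_derive h s (dh s)) ->
  (forall s, a <= s <= b -> 0 <= dh s) -> h a <= h b.
Proof.
  intros Hab Hd Hs. enough (- h b <= - h a) by lra.
  apply (deriv_nonpos_le (fun t => - h t) (fun t => - dh t)); auto.
  - intros; apply is_derive_opp_R; auto.
  - intros s Hs'; specialize (Hs s Hs'); lra.
Qed.

Lemma deriv_neg_lt (h dh : R -> R) a b : a < b ->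
  (forall s, a <= s <= b -> is_derive h s (dh s)) ->
  (forall s, a < s < b -> dh s < 0) -> h b < h a.
Proof.
  intros Hab Hd Hs.
  destruct (MVT_cor2 h dh a b) as [c [Hc1 Hc2]]; [lra| |].
  - intros c Hc. apply is_derive_Reals, Hd; lra.
  - assert (dh c < 0) by (apply Hs; lra). nra.
Qed.

Lemma is_derive_local_lipschitz (f : R -> R) (df m : R) : is_derive f m df ->
  exists d, 0 < d /\ forall h, Rabs h < d -> Rabs (f (m + h) - f m) <= Rabs h * (Rabs df + 1).
Proof.
  intros H. apply is_derive_Reals in H. destruct (H 1 Rlt_0_1) as [d Hd].
  exists d. split. apply cond_pos. intros h Hh.
  destruct (Req_dec h 0) as [->|Hne].
  - rewrite Rplus_0_r, Rminus_diag, Rabs_R0. lra.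
  - specialize (Hd h Hne Hh).
    replace (f (m + h) - f m) with (h * ((f (m + h) - f m) / h - df) + h * df) by (field; auto).
    eapply Rle_trans. apply Rabs_triang. rewrite !Rabs_mult.
    pose proof (Rabs_pos h). nra.
Qed.

Lemma pos_near_of_pos (f : R -> R) (df m : R) : is_derive f m df -> 0 < f m ->
  exists d, 0 < d /\ forall u, Rabs (u - m) < d -> 0 < f u.
Proof.
  intros H Hm. destruct (is_derive_local_lipschitz f df m H) as [d [Hd HL]].
  assert (Hq : 0 < f m / (Rabs df + 1)) by (apply Rdiv_lt_0_compat; pose proof (Rabs_pos df); lra).
  exists (Rmin d (f m / (Rabs df + 1))). split. apply Rmin_glb_lt; auto.
  intros u Hu. specialize (HL (u - m)). replace (m + (u - m)) with u in HL by ring.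
  assert (Rabs (u - m) < d) by (eapply Rlt_le_trans; [exact Hu|apply Rmin_l]).
  specialize (HL H0).
  assert (Rabs (u - m) * (Rabs df + 1) < f m).
  { assert (Rabs (u - m) < f m / (Rabs df + 1)) by (eapply Rlt_le_trans; [exact Hu|apply Rmin_r]).
    pose proof (Rabs_pos df). apply (Rmult_lt_compat_r (Rabs df + 1)) in H1; [|lra].
    unfold Rdiv in H1. rewrite Rmult_assoc, Rinv_l, Rmult_1_r in H1; lra. }
  apply Rabs_le_between in HL. lra.
Qed.

Lemma neg_near_of_neg (f : R -> R) (df m : R) : is_derive f m df -> f m < 0 ->
  exists d, 0 < d /\ forall u, Rabs (u - m) < d -> f u < 0.
Proof.
  intros H Hm. destruct (pos_near_of_pos (fun t => - f t) (- df) m) as [d [Hd Hu]].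
  apply is_derive_opp_R; auto. lra. exists d. split; auto. intros u Hu'. specialize (Hu u Hu'). lra.
Qed.

Lemma sign_change_at_simple_zero (f : R -> R) (df m : R) : is_derive f m df -> f m = 0 -> 0 < df ->
  exists d, 0 < d /\ forall h, 0 < h < d -> 0 < f (m + h) /\ f (m - h) < 0.
Proof.
  intros H Hm Hdf. apply is_derive_Reals in H.
  destruct (H (df / 2) ltac:(lra)) as [d Hd]. exists d. split. apply cond_pos.
  intros h Hh. split.
  - specialize (Hd h ltac:(lra) ltac:(rewrite Rabs_pos_eq; lra)). rewrite Hm, Rminus_0_r in Hd.
    apply Rabs_lt_between in Hd.
    assert (0 < f (m + h) / h) by lra.
    replace (f (m + h)) with (f (m + h) / h * h) by (field; lra). nra.
  - specialize (Hd (- h) ltac:(lra) ltac:(rewrite Rabs_Ropp, Rabs_pos_eq; lra)). rewrite Hm, Rminus_0_r in Hd.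
    apply Rabs_lt_between in Hd. replace (m + - h) with (m - h) in Hd by ring.
    assert (0 < f (m - h) / - h) by lra.
    replace (f (m - h)) with (f (m - h) / - h * - h) by (field; lra). nra.
Qed.

Section SignAtZeros.

Variables f df : R -> R.
Hypotheses (Hd : forall t, is_derive f t (df t)) (Hz : forall t, f t = 0 -> 0 < df t).

Lemma pos_right_of_nonneg m : 0 <= f m -> exists d, 0 < d /\ forall u, m < u < m + d -> 0 < f u.
Proof.
  intros [Hpos|Hzero].
  - destruct (pos_near_of_pos f (df m) m (Hd m) Hpos) as [d [Hd0 Hd1]].
    exists d. split; auto. intros u Hu. apply Hd1. rewrite Rabs_pos_eq; lra.
  - destruct (sign_change_at_simple_zero f (df m) m (Hd m) (eq_sym Hzero) (Hz m (eq_sym Hzero)))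
      as [d [Hd0 Hd1]].
    exists d. split; auto. intros u Hu. replace u with (m + (u - m)) by ring. apply Hd1. lra.
Qed.

Lemma neg_left_of_nonpos m : f m <= 0 -> exists d, 0 < d /\ forall u, m - d < u < m -> f u < 0.
Proof.
  intros [Hneg|Hzero].
  - destruct (neg_near_of_neg f (df m) m (Hd m) Hneg) as [d [Hd0 Hd1]].
    exists d. split; auto. intros u Hu. apply Hd1. rewrite Rabs_left1; lra.
  - destruct (sign_change_at_simple_zero f (df m) m (Hd m) Hzero (Hz m Hzero)) as [d [Hd0 Hd1]].
    exists d. split; auto. intros u Hu. replace u with (m - (m - u)) by ring. apply Hd1. lra.
Qed.

Lemma pos_of_deriv_pos_at_zeros a b : a < b -> 0 <= f a -> 0 < f b.
Proof.
  intros Hab Ha. destruct (Rlt_or_le 0 (f b)) as [|Hb]; auto. exfalso.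
  set (E := fun s => a <= s <= b /\ forall u, a < u <= s -> 0 < f u).
  destruct (completeness E) as [m [Hub Hlub]].
  { exists b. intros s [Hs _]. lra. }
  { exists a. split; [lra | intros; lra]. }
  assert (Hm2 : m <= b) by (apply Hlub; intros s [Hs _]; lra).
  assert (Hin : forall u, a < u < m -> 0 < f u).
  { intros u Hu. apply NNPP. intros Hn.
    assert (m <= u); [|lra].
    apply Hlub. intros s [Hs Hpos]. destruct (Rle_or_lt s u) as [|Hus]; auto.
    exfalso. apply Hn, Hpos. lra. }
  assert (Hext : forall c d, a <= c -> 0 < d -> (forall u, c < u < c + d -> 0 < f u) ->
            (forall u, a < u <= c -> 0 < f u) -> Rmin (c + d / 2) b <= m).
  { intros c d Hc Hd0 Hright Hleft. apply Hub. split; [split; [apply Rmin_glb|apply Rmin_r]; lra|].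
    intros u Hu. destruct (Rle_or_lt u c); [apply Hleft; lra|].
    apply Hright. split; [lra|]. pose proof (Rmin_l (c + d / 2) b). lra. }
  assert (Hma : a < m).
  { destruct (pos_right_of_nonneg a Ha) as [d [Hd0 Hd1]].
    pose proof (Hext a d (Rle_refl a) Hd0 Hd1 ltac:(intros; lra)).
    assert (a < Rmin (a + d / 2) b) by (apply Rmin_glb_lt; lra). lra. }
  destruct (Rle_or_lt (f m) 0) as [Hnp|Hpos].
  - destruct (neg_left_of_nonpos m Hnp) as [d [Hd0 Hd1]].
    set (u := m - Rmin (d / 2) ((m - a) / 2)).
    assert (0 < Rmin (d / 2) ((m - a) / 2)) by (apply Rmin_glb_lt; lra).
    pose proof (Rmin_l (d / 2) ((m - a) / 2)). pose proof (Rmin_r (d / 2) ((m - a) / 2)).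
    assert (0 < f u) by (apply Hin; unfold u; lra).
    assert (f u < 0) by (apply Hd1; unfold u; lra). lra.
  - assert (Hmb : m < b) by (destruct (Req_dec m b) as [->|]; lra).
    destruct (pos_right_of_nonneg m (Rlt_le _ _ Hpos)) as [d [Hd0 Hd1]].
    assert (Hleft : forall u, a < u <= m -> 0 < f u).
    { intros u Hu. destruct (Req_dec u m) as [->|]; [exact Hpos | apply Hin; lra]. }
    pose proof (Hext m d (Rlt_le _ _ Hma) Hd0 Hd1 Hleft).
    assert (m < Rmin (m + d / 2) b) by (apply Rmin_glb_lt; lra). lra.
Qed.

End SignAtZeros.

(* Comparison of [f] and [- f] with [C s^(n+1) / (n+1)] on [[0, t]]. *)
Lemma abs_le_of_deriv_pow_bound_nonneg (f df : R -> R) (C : R) (n : nat) t : 0 <= t -> f 0 = 0 ->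
  (forall s, 0 <= s <= t -> is_derive f s (df s)) ->
  (forall s, 0 <= s <= t -> Rabs (df s) <= C * s ^ n) ->
  Rabs (f t) <= C * t ^ (S n) / INR (S n).
Proof.
  intros Ht H0 Hd Hb. assert (HS : 0 < INR (S n)) by (apply lt_0_INR; lia).
  set (P := fun s => (C / INR (S n)) * s ^ (S n)).
  assert (HP : forall s, is_derive P s (C * s ^ n)).
  { intros s. eapply is_derive_eq_val.
    - apply (is_derive_scal (fun s => s ^ S n)), (is_derive_pow (fun t => t)), is_derive_id_R.
    - simpl pred. field. lra. }
  assert (E1 : f t - P t <= f 0 - P 0).
  { apply (deriv_nonpos_le (fun s => f s - P s) (fun s => df s - C * s ^ n)); auto.
    - intros s Hs; apply is_derive_minus_R; [apply Hd; auto | apply HP].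
    - intros s Hs. specialize (Hb s Hs). apply Rabs_le_between in Hb. lra. }
  assert (E2 : - f t - P t <= - f 0 - P 0).
  { apply (deriv_nonpos_le (fun s => - f s - P s) (fun s => - df s - C * s ^ n)); auto.
    - intros s Hs; apply is_derive_minus_R; [apply is_derive_opp_R, Hd; auto | apply HP].
    - intros s Hs. specialize (Hb s Hs). apply Rabs_le_between in Hb. lra. }
  unfold P in *. rewrite H0 in *. replace (0 ^ S n) with 0 in * by (simpl; ring).
  apply Rabs_le_between. unfold Rdiv in *. lra.
Qed.

Lemma abs_le_of_deriv_pow_bound (f df : R -> R) (C : R) (n : nat) t : f 0 = 0 ->
  (forall s, Rabs s <= Rabs t -> is_derive f s (df s)) ->
  (forall s, Rabs s <= Rabs t -> Rabs (df s) <= C * Rabs s ^ n) ->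
  Rabs (f t) <= C * Rabs t ^ (S n) / INR (S n).
Proof.
  intros H0 Hd Hb. destruct (Rle_or_lt 0 t) as [Ht|Ht].
  - rewrite (Rabs_pos_eq t) by lra.
    apply (abs_le_of_deriv_pow_bound_nonneg f df); auto.
    + intros s Hs. apply Hd. rewrite !Rabs_pos_eq; lra.
    + intros s Hs. replace (s ^ n) with (Rabs s ^ n) by (rewrite Rabs_pos_eq; lra).
      apply Hb. rewrite !Rabs_pos_eq; lra.
  - rewrite (Rabs_left t) by lra. replace (f t) with (f (- - t)) by now rewrite Ropp_involutive.
    apply (abs_le_of_deriv_pow_bound_nonneg (fun s => f (- s)) (fun s => - df (- s))); try lra.
    + now rewrite Ropp_0.
    + intros s Hs. eapply is_derive_eq_val.
      * apply (is_derive_comp f (fun s => - s)); [apply Hd | apply is_derive_opp_R, is_derive_id_R].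
        rewrite Rabs_Ropp, (Rabs_left t), Rabs_pos_eq; lra.
      * unfold scal; simpl; unfold mult; simpl; ring.
    + intros s Hs. rewrite Rabs_Ropp.
      replace (s ^ n) with (Rabs (- s) ^ n) by (rewrite Rabs_Ropp, Rabs_pos_eq; lra).
      apply Hb. rewrite Rabs_Ropp, (Rabs_left t), Rabs_pos_eq; lra.
Qed.

Lemma Rabs_cos_le_1 u : Rabs (cos u) <= 1.
Proof. pose proof (COS_bound u). apply Rabs_le. lra. Qed.

Lemma Rabs_sin_le_1 u : Rabs (sin u) <= 1.
Proof. pose proof (SIN_bound u). apply Rabs_le. lra. Qed.

Lemma Rabs_sin_le s : Rabs (sin s) <= Rabs s.
Proof.
  assert (E : Rabs (sin s) <= 1 * Rabs s ^ 1 / INR 1).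
  { apply (abs_le_of_deriv_pow_bound sin cos); [apply sin_0| |].
    - intros; apply is_derive_sin.
    - intros; simpl. rewrite Rmult_1_l. apply Rabs_cos_le_1. }
  simpl in E. lra.
Qed.

Lemma Rabs_cos_sub_le u v : Rabs (cos u - cos v) <= Rabs (u - v).
Proof.
  assert (E : Rabs (cos (v + (u - v)) - cos v) <= 1 * Rabs (u - v) ^ 1 / INR 1).
  { apply (abs_le_of_deriv_pow_bound (fun s => cos (v + s) - cos v) (fun s => - sin (v + s))).
    - rewrite Rplus_0_r; ring.
    - intros s _. eapply is_derive_eq_val.
      + apply is_derive_minus_R; [apply is_derive_cos_comp|apply is_derive_const_R].
        apply (is_derive_plus_R (fun _ => v) (fun s => s)); [apply is_derive_const_R|apply is_derive_id_R].
      + ring.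
    - intros. rewrite Rabs_Ropp. simpl. rewrite Rmult_1_l. apply Rabs_sin_le_1. }
  replace (v + (u - v)) with u in E by ring. simpl in E. lra.
Qed.

Lemma Rabs_sin_sub_le u v : Rabs (sin u - sin v) <= Rabs (u - v).
Proof.
  assert (E : Rabs (sin (v + (u - v)) - sin v) <= 1 * Rabs (u - v) ^ 1 / INR 1).
  { apply (abs_le_of_deriv_pow_bound (fun s => sin (v + s) - sin v) (fun s => cos (v + s))).
    - rewrite Rplus_0_r; ring.
    - intros s _. eapply is_derive_eq_val.
      + apply is_derive_minus_R; [apply is_derive_sin_comp|apply is_derive_const_R].
        apply (is_derive_plus_R (fun _ => v) (fun s => s)); [apply is_derive_const_R|apply is_derive_id_R].
      + ring.
    - intros. simpl. rewrite Rmult_1_l. apply Rabs_cos_le_1. }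
  replace (v + (u - v)) with u in E by ring. simpl in E. lra.
Qed.

Lemma Rabs_cos_sub_1_le_sqr s : Rabs (cos s - 1) <= s ^ 2 / 2.
Proof.
  assert (E : Rabs (cos s - 1) <= 1 * Rabs s ^ 2 / INR 2).
  { apply (abs_le_of_deriv_pow_bound (fun s => cos s - 1) (fun s => - sin s)).
    - rewrite cos_0; ring.
    - intros. eapply is_derive_eq_val.
      + apply is_derive_minus_R;
          [apply (is_derive_cos_comp (fun t => t)), is_derive_id_R | apply is_derive_const_R].
      + ring.
    - intros. rewrite Rabs_Ropp. pose proof (Rabs_sin_le s0). simpl; lra. }
  rewrite pow2_abs in E. simpl in E. lra.
Qed.

Lemma Rabs_cos_sub_1_le s : Rabs (cos s - 1) <= Rabs s.
Proof.
  pose proof (Rabs_cos_sub_1_le_sqr s). pose proof (COS_bound s).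
  destruct (Rle_or_lt (Rabs s) 2).
  - rewrite <- pow2_abs in H. pose proof (Rabs_pos s). simpl in H. nra.
  - apply Rabs_le. lra.
Qed.

Lemma Rabs_sin_sub_id_le_sqr s : Rabs (sin s - s) <= s ^ 2 / 2.
Proof.
  assert (E : Rabs (sin s - s) <= 1 * Rabs s ^ 2 / INR 2).
  { apply (abs_le_of_deriv_pow_bound (fun s => sin s - s) (fun s => cos s - 1)).
    - rewrite sin_0; ring.
    - intros. eapply is_derive_eq_val.
      + apply is_derive_minus_R;
          [apply (is_derive_sin_comp (fun t => t)), is_derive_id_R | apply is_derive_id_R].
      + ring.
    - intros. pose proof (Rabs_cos_sub_1_le s0). simpl; lra. }
  rewrite pow2_abs in E. simpl in E. lra.
Qed.
(** * Global solutions of Lipschitz differential equations *)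

Definition continuous_R (f : R -> R) := forall t, continuous f t.

Lemma continuous_R_plus (f g : R -> R) :
  continuous_R f -> continuous_R g -> continuous_R (fun s => f s + g s).
Proof. intros H1 H2 t. apply (continuous_plus f g); auto. Qed.

Lemma continuous_R_mult (f g : R -> R) :
  continuous_R f -> continuous_R g -> continuous_R (fun s => f s * g s).
Proof. intros H1 H2 t. apply (continuous_mult f g); auto. Qed.

Lemma continuous_R_opp (f : R -> R) : continuous_R f -> continuous_R (fun s => - f s).
Proof. intros H t. apply (continuous_opp f); auto. Qed.

Lemma continuous_R_abs (f : R -> R) : continuous_R f -> continuous_R (fun s => Rabs (f s)).
Proof. intros H t. apply (continuous_comp f Rabs); [apply H | apply continuous_Rabs]. Qed.

Lemma continuous_R_cos (f : R -> R) : continuous_R f -> continuous_R (fun s => cos (f s)).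
Proof.
  intros H t. apply (continuous_comp f cos); [apply H|].
  apply continuity_pt_filterlim, continuity_cos.
Qed.

Lemma continuous_R_sin (f : R -> R) : continuous_R f -> continuous_R (fun s => sin (f s)).
Proof.
  intros H t. apply (continuous_comp f sin); [apply H|].
  apply continuity_pt_filterlim, continuity_sin.
Qed.

Lemma continuous_R_of_is_derive (f df : R -> R) :
  (forall t, is_derive f t (df t)) -> continuous_R f.
Proof. intros H t. apply (@ex_derive_continuous R_AbsRing R_NormedModule). eexists; apply H. Qed.

Lemma continuous_R_bounded_on (f : R -> R) a b :
  continuous_R f -> exists K, 0 <= K /\ forall t, a <= t <= b -> Rabs (f t) <= K.
Proof.
  intros Hf. destruct (Rle_or_lt a b) as [Hab|Hab].
  - destruct (continuity_ab_maj (fun t => Rabs (f t)) a b Hab) as [M [HM _]].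
    { intros c _. apply continuity_pt_filterlim, continuous_R_abs, Hf. }
    exists (Rabs (f M)). split; [apply Rabs_pos | intros t Ht; apply HM; auto].
  - exists 0. split; [lra | intros; lra].
Qed.

Lemma is_derive_RInt_0 (h : R -> R) t : continuous_R h ->
  is_derive (fun u => RInt h 0 u) t (h t).
Proof.
  intros Hc. apply (is_derive_RInt h (fun u => RInt h 0 u) 0 t); [|apply Hc].
  apply filter_forall. intros b. apply (@RInt_correct R_CompleteNormedModule).
  apply (@ex_RInt_continuous R_CompleteNormedModule). intros; apply Hc.
Qed.

Lemma exp_series_tail_cv x l : 0 <= x -> exp_in x l ->
  Un_cv (fun n => sum_f_R0 (fun k => Rabs (x ^ (S k) / INR (fact (S k)))) n) (l - 1).
Proof.
  intros Hx Hl.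
  assert (E : forall n, sum_f_R0 (fun k => Rabs (x ^ (S k) / INR (fact (S k)))) n =
     sum_f_R0 (fun i => / INR (fact i) * x ^ i) (S n) - 1).
  { induction n as [|n IH].
    - simpl. rewrite Rabs_pos_eq; [field | simpl; lra].
    - rewrite tech5, IH, (tech5 _ (S n)), Rabs_pos_eq; [unfold Rdiv; ring|].
      apply Rmult_le_pos; [apply pow_le; auto|].
      left; apply Rinv_0_lt_compat, lt_0_INR, lt_O_fact. }
  intros eps Heps. destruct (Hl eps Heps) as [N HN]. exists N. intros n Hn.
  rewrite E. unfold Rdist in *.
  replace (sum_f_R0 (fun i : nat => / INR (fact i) * x ^ i) (S n) - 1 - (l - 1))
    with (sum_f_R0 (fun i : nat => / INR (fact i) * x ^ i) (S n) - l) by ring.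
  apply HN. lia.
Qed.

Lemma SFL_spec fn cv x : Un_cv (fun N => SP fn N x) (SFL fn cv x).
Proof. unfold SFL. destruct (cv x) as [l Hl]. exact Hl. Qed.

Section Picard.

Variable G : R -> R -> R.
Hypothesis G_cont : forall phi, continuous_R phi -> continuous_R (fun s => G s (phi s)).
Hypothesis G_lip : forall r, 0 < r -> exists K, 0 <= K /\ forall t u v, Rabs t <= r ->
  Rabs (G t u) <= K /\ Rabs (G t u - G t v) <= K * Rabs (u - v).

Fixpoint picard_iter (c : R) (n : nat) : R -> R :=
  match n with
  | O => fun _ => c
  | S m => fun t => c + RInt (fun s => G s (picard_iter c m s)) 0 t
  end.

Lemma picard_iter_0 c n : picard_iter c n 0 = c.
Proof. destruct n; simpl; auto. rewrite RInt_point. unfold zero; simpl; ring. Qed.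

Lemma picard_iter_deriv c n :
  continuous_R (picard_iter c n) /\
  forall t, is_derive (picard_iter c (S n)) t (G t (picard_iter c n t)).
Proof.
  induction n as [|n [IHc IHd]].
  - split; [intros t; apply continuous_const|].
    intros t. eapply is_derive_eq_val; [|apply Rplus_0_l].
    apply is_derive_plus_R; [apply is_derive_const_R|].
    apply (is_derive_RInt_0 (fun s => G s c)), (G_cont (fun _ => c)). intros ?; apply continuous_const.
  - assert (Hc : continuous_R (picard_iter c (S n))) by exact (continuous_R_of_is_derive _ _ IHd).
    split; [exact Hc|]. intros t. eapply is_derive_eq_val; [|apply Rplus_0_l].
    apply is_derive_plus_R; [apply is_derive_const_R|].
    apply (is_derive_RInt_0 (fun s => G s (picard_iter c (S n) s))), (G_cont _ Hc).
Qed.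

Lemma picard_iter_step_bound c r K : 0 <= K ->
  (forall t u v, Rabs t <= r -> Rabs (G t u) <= K /\ Rabs (G t u - G t v) <= K * Rabs (u - v)) ->
  forall n t, Rabs t <= r ->
    Rabs (picard_iter c (S n) t - picard_iter c n t)
      <= K ^ (S n) * Rabs t ^ (S n) / INR (fact (S n)).
Proof.
  intros HK0 HKb. induction n as [|n IH]; intros t Ht.
  - assert (E : Rabs (picard_iter c 1 t - picard_iter c 0 t) <= K * Rabs t ^ 1 / INR 1).
    { apply (abs_le_of_deriv_pow_bound (fun t => picard_iter c 1 t - picard_iter c 0 t)
        (fun s => G s c - 0)).
      + simpl. rewrite RInt_point. unfold zero; simpl; ring.
      + intros s _. apply is_derive_minus_R;
          [apply (proj2 (picard_iter_deriv c 0) s) | apply is_derive_const_R].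
      + intros s Hs. rewrite Rminus_0_r. simpl; rewrite Rmult_1_r. apply (HKb s c c). lra. }
    eapply Rle_trans; [exact E|]. right. simpl. field.
  - assert (Hf1 : 0 < INR (fact (S n))) by (apply lt_0_INR, lt_O_fact).
    assert (E : Rabs (picard_iter c (S (S n)) t - picard_iter c (S n) t) <=
       K ^ (S (S n)) / INR (fact (S n)) * Rabs t ^ (S (S n)) / INR (S (S n))).
    { apply (abs_le_of_deriv_pow_bound (fun t => picard_iter c (S (S n)) t - picard_iter c (S n) t)
        (fun s => G s (picard_iter c (S n) s) - G s (picard_iter c n s))).
      + rewrite !picard_iter_0; ring.
      + intros s _. apply is_derive_minus_R;
          [apply (proj2 (picard_iter_deriv c (S n)) s)|apply (proj2 (picard_iter_deriv c n) s)].
      + intros s Hs. destruct (HKb s (picard_iter c (S n) s) (picard_iter c n s)) as [_ H2]; [lra|].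
        eapply Rle_trans; [apply H2|]. specialize (IH s ltac:(lra)).
        replace (K ^ S (S n) / INR (fact (S n)) * Rabs s ^ S n) with
          (K * (K ^ S n * Rabs s ^ S n / INR (fact (S n))))
          by (change (K ^ S (S n)) with (K * K ^ S n); field; lra).
        apply Rmult_le_compat_l; auto. }
    eapply Rle_trans; [apply E|]. right.
    rewrite (fact_simpl (S n)), mult_INR. field. split; [lra|]. apply not_0_INR; lia.
Qed.

Lemma SP_picard_iter c N t :
  SP (fun k t => picard_iter c (S k) t - picard_iter c k t) N t = picard_iter c (S N) t - c.
Proof.
  induction N as [|N IH]; unfold SP in *; [simpl; ring|].
  rewrite tech5, IH. ring.
Qed.

Lemma picard_increments_CVN c : CVN_R (fun k t => picard_iter c (S k) t - picard_iter c k t).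
Proof.
  intros r. destruct (constructive_indefinite_description _ (G_lip r (cond_pos r))) as [K [HK0 HK]].
  exists (fun k => (K * r) ^ (S k) / INR (fact (S k))).
  destruct (exist_exp (K * r)) as [l Hl]. exists (l - 1). split.
  - apply exp_series_tail_cv; auto. apply Rmult_le_pos; auto. left; apply cond_pos.
  - intros n y Hy. unfold Boule in Hy. rewrite Rminus_0_r in Hy.
    eapply Rle_trans; [apply (picard_iter_step_bound c r K HK0 HK n y); lra|].
    rewrite Rpow_mult_distr. unfold Rdiv. apply Rmult_le_compat_r.
    + left; apply Rinv_0_lt_compat, lt_0_INR, lt_O_fact.
    + apply Rmult_le_compat_l; [apply pow_le; auto|].
      apply pow_incr. split; [apply Rabs_pos|lra].
Qed.

(* The solution is the uniform limit of the Picard iterates on every ball, which allows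
   differentiating term by term ([CVU_derivable]). *)
Lemma ode_global_exists c : exists th : R -> R, th 0 = c /\ forall t, is_derive th t (G t (th t)).
Proof.
  set (fn := fun k t => picard_iter c (S k) t - picard_iter c k t).
  pose proof (picard_increments_CVN c) as CVN.
  set (cv := CVN_R_CVS fn CVN).
  exists (fun t => c + SFL fn cv t). split.
  - assert (H0 : SFL fn cv 0 = 0).
    { apply (UL_sequence (fun N => SP fn N 0)); [apply SFL_spec|].
      intros eps Heps. exists O. intros n _. unfold fn. rewrite SP_picard_iter, picard_iter_0.
      unfold Rdist. rewrite Rminus_diag, Rminus_0_r, Rabs_R0. lra. }
    rewrite H0; ring.
  - intros t. apply is_derive_Reals.
    assert (Hr : 0 < Rabs t + 1) by (pose proof (Rabs_pos t); lra).
    set (r := mkposreal _ Hr).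
    apply (CVU_derivable (fun n => picard_iter c (S n)) (fun n s => G s (picard_iter c n s))
            (fun t => c + SFL fn cv t) (fun s => G s (c + SFL fn cv s)) 0 r).
    + intros eps Heps. destruct (G_lip r Hr) as [K [HK0 HK]].
      destruct (CVN_CVU fn cv r (CVN r) (eps / (K + 1))) as [N HN].
      { apply Rdiv_lt_0_compat; lra. }
      exists (S N). intros n y Hn Hy. destruct n as [|m]; [lia|].
      assert (Hy' : Rabs y <= r) by (unfold Boule in Hy; rewrite Rminus_0_r in Hy; lra).
      destruct (HK y (c + SFL fn cv y) (picard_iter c (S m) y) Hy') as [_ H2].
      eapply Rle_lt_trans; [apply H2|].
      specialize (HN m y ltac:(lia) Hy). unfold fn in HN at 2. rewrite SP_picard_iter in HN.
      replace (c + SFL fn cv y - picard_iter c (S m) y)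
        with (SFL fn cv y - (picard_iter c (S m) y - c)) by ring.
      apply Rle_lt_trans with (K * (eps / (K + 1))).
      * apply Rmult_le_compat_l; auto. left; exact HN.
      * apply Rlt_le_trans with ((K + 1) * (eps / (K + 1))).
        -- apply Rmult_lt_compat_r; [apply Rdiv_lt_0_compat|]; lra.
        -- right; field; lra.
    + intros x _ eps Heps. destruct (SFL_spec fn cv x eps Heps) as [N HN].
      exists N. intros n Hn. specialize (HN n Hn). unfold fn in HN. rewrite SP_picard_iter in HN.
      unfold Rdist in *. replace (picard_iter c (S n) x - (c + SFL fn cv x)) with
        (picard_iter c (S n) x - c - SFL fn cv x) by ring. exact HN.
    + intros n x _. apply is_derive_Reals, (proj2 (picard_iter_deriv c n) x).
    + unfold Boule. rewrite Rminus_0_r. simpl. lra.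
Qed.

End Picard.

Lemma exp_le_exp_of_le u v : u <= v -> exp u <= exp v.
Proof. intros [Hlt| ->]; [left; apply exp_increasing, Hlt | right; reflexivity]. Qed.

Lemma gronwall_affine (u du : R -> R) (C Q a b : R) : 0 <= C -> 0 <= Q -> a <= b ->
  (forall s, a <= s <= b -> is_derive u s (du s)) ->
  (forall s, a <= s <= b -> du s <= C * u s + Q) ->
  u b <= (u a + Q * (b - a)) * exp (C * (b - a)).
Proof.
  intros HC HQ Hab Hd Hdu.
  set (Ea := exp (- C * a)).
  assert (Hmono : u b * exp (- C * b) - Q * Ea * b <= u a * exp (- C * a) - Q * Ea * a).
  { apply (deriv_nonpos_le (fun s => u s * exp (- C * s) - Q * Ea * s)
      (fun s => du s * exp (- C * s) + u s * (exp (- C * s) * - C) - Q * Ea * 1)); auto.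
    - intros s Hs. apply is_derive_minus_R.
      + apply (is_derive_mult_R u (fun s => exp (- C * s))); [auto | apply is_derive_exp_lin].
      + apply (is_derive_scal (fun s => s)), is_derive_id_R.
    - intros s Hs. specialize (Hdu s Hs).
      assert (exp (- C * s) <= Ea) by (apply exp_le_exp_of_le; nra).
      pose proof (exp_pos (- C * s)). nra. }
  assert (Hb : exp (- C * b) * exp (C * (b - a)) = Ea).
  { unfold Ea. rewrite <- exp_plus. f_equal. ring. }
  fold Ea in Hmono. set (E := exp (C * (b - a))) in *. set (Eb := exp (- C * b)) in *.
  assert (HE : 0 < E) by apply exp_pos. assert (HEa : 0 < Ea) by apply exp_pos.
  assert (Hmono' : u b * Eb * E <= (u a + Q * (b - a)) * Ea * E)
    by (apply Rmult_le_compat_r; lra).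
  rewrite Rmult_assoc, Hb in Hmono'.
  apply (Rmult_le_reg_r Ea); [exact HEa | lra].
Qed.

Lemma gronwall_backward (u du : R -> R) (C a b : R) : a <= b ->
  (forall s, a <= s <= b -> is_derive u s (du s)) ->
  (forall s, a <= s <= b -> - (C * u s) <= du s) ->
  u a <= u b * exp (C * (b - a)).
Proof.
  intros Hab Hd Hdu.
  assert (Hmono : u a * exp (C * a) <= u b * exp (C * b)).
  { apply (deriv_nonneg_le (fun s => u s * exp (C * s))
      (fun s => du s * exp (C * s) + u s * (exp (C * s) * C))); auto.
    - intros s Hs. apply (is_derive_mult_R u (fun s => exp (C * s))); [auto | apply is_derive_exp_lin].
    - intros s Hs. specialize (Hdu s Hs). pose proof (exp_pos (C * s)). nra. }
  assert (Hb : exp (C * b) = exp (C * a) * exp (C * (b - a))).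
  { rewrite <- exp_plus. f_equal. ring. }
  apply (Rmult_le_reg_r (exp (C * a))); [apply exp_pos|].
  rewrite Hb in Hmono. lra.
Qed.

(** * The equation [th' = A t cos th + B t sin th] *)

Lemma Rabs_rot_le C S p q : Rabs C <= 1 -> Rabs S <= 1 -> Rabs (C * p - S * q) <= Rabs p + Rabs q.
Proof.
  intros HC HS. eapply Rle_trans; [apply Rabs_triang|]. rewrite Rabs_Ropp, !Rabs_mult.
  pose proof (Rabs_pos p). pose proof (Rabs_pos q). nra.
Qed.

Definition trig_field (A B : R -> R) (t th : R) : R := A t * cos th + B t * sin th.
Definition trig_field_dth (A B : R -> R) (t th : R) : R := - A t * sin th + B t * cos th.

Lemma trig_field_bound A B t u : Rabs (trig_field A B t u) <= Rabs (A t) + Rabs (B t).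
Proof.
  unfold trig_field. eapply Rle_trans; [apply Rabs_triang|]. rewrite !Rabs_mult.
  pose proof (Rabs_cos_le_1 u). pose proof (Rabs_sin_le_1 u).
  pose proof (Rabs_pos (A t)). pose proof (Rabs_pos (B t)). nra.
Qed.

Lemma trig_field_dth_bound A B t u : Rabs (trig_field_dth A B t u) <= Rabs (A t) + Rabs (B t).
Proof.
  unfold trig_field_dth. eapply Rle_trans; [apply Rabs_triang|]. rewrite !Rabs_mult, Rabs_Ropp.
  pose proof (Rabs_cos_le_1 u). pose proof (Rabs_sin_le_1 u).
  pose proof (Rabs_pos (A t)). pose proof (Rabs_pos (B t)). nra.
Qed.

Lemma trig_field_lipschitz A B t u v :
  Rabs (trig_field A B t u - trig_field A B t v) <= (Rabs (A t) + Rabs (B t)) * Rabs (u - v).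
Proof.
  unfold trig_field.
  replace (A t * cos u + B t * sin u - (A t * cos v + B t * sin v)) with
    (A t * (cos u - cos v) + B t * (sin u - sin v)) by ring.
  eapply Rle_trans; [apply Rabs_triang|]. rewrite !Rabs_mult.
  pose proof (Rabs_cos_sub_le u v). pose proof (Rabs_sin_sub_le u v).
  pose proof (Rabs_pos (A t)). pose proof (Rabs_pos (B t)). nra.
Qed.

Lemma trig_field_taylor A B t th d :
  Rabs (trig_field A B t (th + d) - trig_field A B t th - trig_field_dth A B t th * d)
    <= (Rabs (A t) + Rabs (B t)) * d ^ 2.
Proof.
  unfold trig_field, trig_field_dth. rewrite cos_plus, sin_plus.
  replace (A t * (cos th * cos d - sin th * sin d) + B t * (sin th * cos d + cos th * sin d) -
     (A t * cos th + B t * sin th) - (- A t * sin th + B t * cos th) * d) with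
   (A t * (cos th * (cos d - 1) - sin th * (sin d - d)) +
    B t * (sin th * (cos d - 1) - (- cos th) * (sin d - d))) by ring.
  eapply Rle_trans; [apply Rabs_triang|]. rewrite !Rabs_mult.
  assert (Hc : Rabs (- cos th) <= 1) by (rewrite Rabs_Ropp; apply Rabs_cos_le_1).
  pose proof (Rabs_rot_le _ _ (cos d - 1) (sin d - d) (Rabs_cos_le_1 th) (Rabs_sin_le_1 th)).
  pose proof (Rabs_rot_le _ _ (cos d - 1) (sin d - d) (Rabs_sin_le_1 th) Hc).
  pose proof (Rabs_cos_sub_1_le_sqr d). pose proof (Rabs_sin_sub_id_le_sqr d).
  pose proof (Rabs_pos (A t)). pose proof (Rabs_pos (B t)). nra.
Qed.

Section TrigODE.

Variables A B : R -> R.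
Hypotheses (HA : continuous_R A) (HB : continuous_R B).

Lemma trig_coef_bound T : exists K, 0 <= K /\ forall t, Rabs t <= T -> Rabs (A t) + Rabs (B t) <= K.
Proof.
  destruct (continuous_R_bounded_on (fun t => Rabs (A t) + Rabs (B t)) (- T) T) as [K [HK0 HK]].
  { apply continuous_R_plus; apply continuous_R_abs; auto. }
  exists K. split; auto. intros t Ht. apply Rabs_le_between in Ht. specialize (HK t Ht).
  rewrite Rabs_pos_eq in HK; auto. pose proof (Rabs_pos (A t)); pose proof (Rabs_pos (B t)); lra.
Qed.

Lemma continuous_trig_field phi :
  continuous_R phi -> continuous_R (fun s => trig_field A B s (phi s)).
Proof.
  intros Hphi. unfold trig_field.
  apply continuous_R_plus; apply continuous_R_mult; auto.
  - apply continuous_R_cos; auto.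
  - apply continuous_R_sin; auto.
Qed.

Lemma trig_field_lipschitz_on r : 0 < r -> exists K, 0 <= K /\ forall t u v, Rabs t <= r ->
  Rabs (trig_field A B t u) <= K /\
  Rabs (trig_field A B t u - trig_field A B t v) <= K * Rabs (u - v).
Proof.
  intros _. destruct (trig_coef_bound r) as [K [HK0 HK]]. exists K. split; auto.
  intros t u v Ht. specialize (HK t Ht). split.
  - eapply Rle_trans; [apply trig_field_bound | exact HK].
  - eapply Rle_trans; [apply trig_field_lipschitz|].
    apply Rmult_le_compat_r; [apply Rabs_pos | exact HK].
Qed.

Definition is_trig_sol (th : R -> R) := forall t, is_derive th t (trig_field A B t (th t)).

Definition trig_sol (c : R) : R -> R :=
  epsilon (inhabits (fun _ => 0)) (fun th => th 0 = c /\ is_trig_sol th).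

Lemma trig_sol_spec c : trig_sol c 0 = c /\ is_trig_sol (trig_sol c).
Proof.
  unfold trig_sol. apply epsilon_spec.
  exact (ode_global_exists (trig_field A B) continuous_trig_field trig_field_lipschitz_on c).
Qed.

Lemma is_derive_sqr_diff th1 th2 t : is_trig_sol th1 -> is_trig_sol th2 ->
  is_derive (fun s => (th1 s - th2 s) ^ 2) t
    (2 * (th1 t - th2 t) * (trig_field A B t (th1 t) - trig_field A B t (th2 t))).
Proof.
  intros H1 H2. eapply is_derive_eq_val.
  - apply (is_derive_pow (fun s => th1 s - th2 s)), is_derive_minus_R; auto.
  - simpl; ring.
Qed.

Lemma Rabs_deriv_sqr_diff_le th1 th2 K t : 0 <= K -> Rabs (A t) + Rabs (B t) <= K ->
  Rabs (2 * (th1 t - th2 t) * (trig_field A B t (th1 t) - trig_field A B t (th2 t)))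
    <= 2 * K * (th1 t - th2 t) ^ 2.
Proof.
  intros HK0 HK.
  assert (HL : Rabs (trig_field A B t (th1 t) - trig_field A B t (th2 t))
                <= K * Rabs (th1 t - th2 t)).
  { eapply Rle_trans; [apply trig_field_lipschitz|].
    apply Rmult_le_compat_r; [apply Rabs_pos | exact HK]. }
  rewrite !Rabs_mult, (Rabs_pos_eq 2), <- pow2_abs by lra.
  pose proof (Rabs_pos (th1 t - th2 t)). simpl. nra.
Qed.

Lemma trig_sol_unique th1 th2 s t : is_trig_sol th1 -> is_trig_sol th2 ->
  th1 s = th2 s -> th1 t = th2 t.
Proof.
  intros H1 H2 Hs.
  destruct (trig_coef_bound (Rabs s + Rabs t)) as [K [HK0 HK]].
  set (u := fun τ => (th1 τ - th2 τ) ^ 2).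
  set (du := fun τ =>
    2 * (th1 τ - th2 τ) * (trig_field A B τ (th1 τ) - trig_field A B τ (th2 τ))).
  assert (Hbd : forall τ, Rmin s t <= τ <= Rmax s t -> Rabs (du τ) <= 2 * K * u τ).
  { intros τ Hτ. apply Rabs_deriv_sqr_diff_le; auto. apply HK, Rabs_le_between.
    unfold Rmin, Rmax in Hτ.
    pose proof (Rle_abs s); pose proof (Rle_abs t); pose proof (Rabs_maj2 s); pose proof (Rabs_maj2 t).
    destruct (Rle_dec s t); split; lra. }
  assert (Hus : u s = 0) by (unfold u; rewrite Hs; ring).
  assert (Hut : u t <= 0).
  { destruct (Rle_or_lt s t) as [Hst|Hst].
    - rewrite Rmin_left, Rmax_right in Hbd by lra.
      eapply Rle_trans.
      + apply (gronwall_affine u du (2 * K) 0 s t); try lra.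
        * intros τ _. apply is_derive_sqr_diff; auto.
        * intros τ Hτ. specialize (Hbd τ Hτ). apply Rabs_le_between in Hbd. lra.
      + rewrite Hus. lra.
    - rewrite Rmin_right, Rmax_left in Hbd by lra.
      eapply Rle_trans.
      + apply (gronwall_backward u du (2 * K) t s); try lra.
        * intros τ _. apply is_derive_sqr_diff; auto.
        * intros τ Hτ. specialize (Hbd τ Hτ). apply Rabs_le_between in Hbd. lra.
      + rewrite Hus. lra. }
  unfold u in Hut. pose proof (pow2_ge_0 (th1 t - th2 t)). nra.
Qed.

Lemma trig_sol_gronwall T K th1 th2 t : is_trig_sol th1 -> is_trig_sol th2 ->
  0 <= K -> (forall s, Rabs s <= T -> Rabs (A s) + Rabs (B s) <= K) -> 0 <= t <= T ->
  (th1 t - th2 t) ^ 2 <= (th1 0 - th2 0) ^ 2 * exp (2 * K * t).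
Proof.
  intros H1 H2 HK0 HK Ht.
  replace (2 * K * t) with (2 * K * (t - 0)) by ring.
  replace ((th1 0 - th2 0) ^ 2) with ((th1 0 - th2 0) ^ 2 + 0 * (t - 0)) by ring.
  apply (gronwall_affine (fun s => (th1 s - th2 s) ^ 2)
    (fun s => 2 * (th1 s - th2 s) * (trig_field A B s (th1 s) - trig_field A B s (th2 s)))
    (2 * K) 0 0 t); try lra.
  - intros s _. apply is_derive_sqr_diff; auto.
  - intros s Hs. rewrite Rplus_0_r.
    assert (Hs' : Rabs s <= T) by (rewrite Rabs_pos_eq; lra).
    pose proof (Rabs_deriv_sqr_diff_le th1 th2 K s HK0 (HK s Hs')) as E.
    apply Rabs_le_between in E. lra.
Qed.

Definition trig_sol_var c s := trig_field_dth A B s (trig_sol c s).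

(* Derivative of [trig_sol c t] in [c]: the solution of the variational equation
   [J' = trig_field_dth J], [J 0 = 1]. *)
Definition trig_sol_jac c t := exp (RInt (trig_sol_var c) 0 t).

Lemma continuous_trig_sol_var c : continuous_R (trig_sol_var c).
Proof.
  destruct (trig_sol_spec c) as [_ Hs].
  pose proof (continuous_R_of_is_derive _ _ Hs) as Hc.
  unfold trig_sol_var, trig_field_dth. apply continuous_R_plus; apply continuous_R_mult.
  - apply continuous_R_opp; auto.
  - apply continuous_R_sin, Hc.
  - auto.
  - apply continuous_R_cos, Hc.
Qed.

Lemma is_derive_trig_sol_jac c t :
  is_derive (trig_sol_jac c) t (trig_sol_jac c t * trig_sol_var c t).
Proof.
  apply (is_derive_exp_comp (fun t => RInt (trig_sol_var c) 0 t)).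
  apply is_derive_RInt_0, continuous_trig_sol_var.
Qed.

Lemma trig_sol_jac_0 c : trig_sol_jac c 0 = 1.
Proof. unfold trig_sol_jac. rewrite RInt_point. apply exp_0. Qed.

(* With [D = th_b - th_c] and [Rf = D - (b - c) J], one has [Rf' = err + p Rf] where
   [p = trig_sol_var c] and [err] is the Taylor remainder of the field at [th_c], of size
   [K D^2 <= K (b - c)^2 e^(2 K t)] by Gronwall. *)
Lemma trig_sol_remainder_deriv_le T K c b t : 0 <= K ->
  (forall s, Rabs s <= T -> Rabs (A s) + Rabs (B s) <= K) -> 0 <= t <= T ->
  2 * (trig_sol b t - trig_sol c t - (b - c) * trig_sol_jac c t)
    * (trig_field A B t (trig_sol b t) - trig_field A B t (trig_sol c t)
       - (b - c) * (trig_sol_jac c t * trig_sol_var c t))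
  <= (2 * K + 1) * (trig_sol b t - trig_sol c t - (b - c) * trig_sol_jac c t) ^ 2
     + K ^ 2 * (b - c) ^ 4 * exp (4 * K * T).
Proof.
  intros HK0 HK Ht.
  destruct (trig_sol_spec c) as [Hc0 Hcs]. destruct (trig_sol_spec b) as [Hb0 Hbs].
  assert (HKt : Rabs (A t) + Rabs (B t) <= K) by (apply HK; rewrite Rabs_pos_eq; lra).
  set (th := trig_sol c) in *. set (thb := trig_sol b) in *. set (h := b - c).
  set (D := thb t - th t). set (r := D - h * trig_sol_jac c t). set (q := trig_sol_var c t).
  set (err := trig_field A B t (th t + D) - trig_field A B t (th t)
              - trig_field_dth A B t (th t) * D).
  assert (Herr : Rabs err <= K * D ^ 2).
  { eapply Rle_trans; [apply trig_field_taylor|].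
    apply Rmult_le_compat_r; [apply pow2_ge_0 | exact HKt]. }
  assert (HD : D ^ 2 <= h ^ 2 * exp (2 * K * t)).
  { unfold D, h. rewrite <- Hb0, <- Hc0. apply (trig_sol_gronwall T K); auto; lra. }
  assert (Hq : q <= K).
  { enough (Rabs q <= K) by (apply Rabs_le_between in H; lra).
    eapply Rle_trans; [apply trig_field_dth_bound | exact HKt]. }
  assert (Herr2 : err ^ 2 <= K ^ 2 * h ^ 4 * exp (4 * K * T)).
  { assert (E1 : err ^ 2 <= (K * D ^ 2) ^ 2).
    { rewrite <- pow2_abs. apply pow_incr. split; [apply Rabs_pos | exact Herr]. }
    assert (E2 : (K * D ^ 2) ^ 2 <= (K * (h ^ 2 * exp (2 * K * t))) ^ 2).
    { apply pow_incr. split; [pose proof (pow2_ge_0 D); nra|]. apply Rmult_le_compat_l; auto. }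
    assert (E3 : exp (2 * K * t) ^ 2 <= exp (4 * K * T)).
    { simpl. rewrite Rmult_1_r, <- exp_plus. apply exp_le_exp_of_le. nra. }
    assert (0 <= K ^ 2 * h ^ 4).
    { replace (h ^ 4) with ((h ^ 2) ^ 2) by ring. apply Rmult_le_pos; apply pow2_ge_0. }
    replace ((K * (h ^ 2 * exp (2 * K * t))) ^ 2) with (K ^ 2 * h ^ 4 * exp (2 * K * t) ^ 2)
      in E2 by ring.
    nra. }
  replace (trig_field A B t (thb t) - trig_field A B t (th t) - h * (trig_sol_jac c t * q))
    with (err + q * r)
    by (unfold err, r, q, trig_sol_var, D; fold th;
        replace (th t + (thb t - th t)) with (thb t) by ring; ring).
  fold D r.
  assert (q * r ^ 2 <= K * r ^ 2) by (pose proof (pow2_ge_0 r); nra).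
  assert (2 * r * err <= r ^ 2 + err ^ 2) by (pose proof (pow2_ge_0 (r - err)); nra).
  replace (2 * r * (err + q * r)) with (2 * r * err + 2 * (q * r ^ 2)) by ring. lra.
Qed.

Definition linear_approx_const K T := K ^ 2 * T * exp (4 * K * T) * exp ((2 * K + 1) * T).

Lemma linear_approx_const_nonneg K T : 0 <= T -> 0 <= linear_approx_const K T.
Proof.
  intros HT. unfold linear_approx_const.
  pose proof (exp_pos (4 * K * T)). pose proof (exp_pos ((2 * K + 1) * T)). pose proof (pow2_ge_0 K).
  apply Rmult_le_pos; [apply Rmult_le_pos; [apply Rmult_le_pos|]|]; lra.
Qed.

Lemma Rabs_le_of_sqr_le_pow4 r h W : 0 <= W -> r ^ 2 <= h ^ 4 * W -> Rabs r <= h ^ 2 * (W + 1).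
Proof.
  intros HW Hr. assert (Hh : 0 <= h ^ 2) by apply pow2_ge_0.
  assert (h ^ 4 * W <= (h ^ 2 * (W + 1)) ^ 2).
  { replace (h ^ 4) with ((h ^ 2) ^ 2) by ring. pose proof (pow2_ge_0 (h ^ 2)). nra. }
  rewrite <- (Rabs_pos_eq (h ^ 2 * (W + 1))) by (apply Rmult_le_pos; lra).
  apply Rsqr_le_abs_0. unfold Rsqr. simpl in *. lra.
Qed.

Lemma trig_sol_linear_approx T K c b : 0 < T -> 0 <= K ->
  (forall s, Rabs s <= T -> Rabs (A s) + Rabs (B s) <= K) ->
  Rabs (trig_sol b T - trig_sol c T - (b - c) * trig_sol_jac c T) <=
    (b - c) ^ 2 * (linear_approx_const K T + 1).
Proof.
  intros HT HK0 HK.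
  destruct (trig_sol_spec c) as [Hc0 Hcs]. destruct (trig_sol_spec b) as [Hb0 Hbs].
  set (Rf := fun t => trig_sol b t - trig_sol c t - (b - c) * trig_sol_jac c t).
  set (dRf := fun t => trig_field A B t (trig_sol b t) - trig_field A B t (trig_sol c t)
                       - (b - c) * (trig_sol_jac c t * trig_sol_var c t)).
  set (Q := K ^ 2 * (b - c) ^ 4 * exp (4 * K * T)).
  assert (HRd : forall t, is_derive Rf t (dRf t)).
  { intros t. apply is_derive_minus_R; [apply is_derive_minus_R; auto|].
    apply (is_derive_scal (trig_sol_jac c)), is_derive_trig_sol_jac. }
  assert (HuT : Rf T ^ 2 <= (Rf 0 ^ 2 + Q * (T - 0)) * exp ((2 * K + 1) * (T - 0))).
  { apply (gronwall_affine (fun t => Rf t ^ 2) (fun t => 2 * Rf t * dRf t)); try lra.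
    - pose proof (pow2_ge_0 K). pose proof (exp_pos (4 * K * T)).
      unfold Q. replace ((b - c) ^ 4) with (((b - c) ^ 2) ^ 2) by ring.
      apply Rmult_le_pos; [apply Rmult_le_pos; [|apply pow2_ge_0] | ]; lra.
    - intros t _. eapply is_derive_eq_val; [apply (is_derive_pow Rf), HRd | simpl; ring].
    - intros t Ht. apply (trig_sol_remainder_deriv_le T); auto. }
  assert (HR0 : Rf 0 = 0) by (unfold Rf; rewrite trig_sol_jac_0, Hb0, Hc0; ring).
  rewrite HR0, !Rminus_0_r in HuT.
  apply Rabs_le_of_sqr_le_pow4; [apply linear_approx_const_nonneg; lra|].
  change (Rf T ^ 2 <= (b - c) ^ 4 * linear_approx_const K T).
  eapply Rle_trans; [exact HuT|]. right. unfold Q, linear_approx_const. ring.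
Qed.

Lemma is_derive_trig_sol_init T c : 0 < T -> is_derive (fun b => trig_sol b T) c (trig_sol_jac c T).
Proof.
  intros HT. destruct (trig_coef_bound T) as [K [HK0 HK]].
  set (W := linear_approx_const K T + 1).
  assert (HW : 0 < W) by (pose proof (linear_approx_const_nonneg K T); unfold W; lra).
  apply is_derive_Reals. intros eps Heps.
  assert (Hd : 0 < eps / W) by (apply Rdiv_lt_0_compat; auto).
  exists (mkposreal _ Hd). intros h Hh Hlt. simpl in Hlt.
  pose proof (trig_sol_linear_approx T K c (c + h) HT HK0 HK) as E.
  fold W in E. replace (c + h - c) with h in E by ring.
  assert (Hpos : 0 < Rabs h) by (apply Rabs_pos_lt; auto).
  replace ((trig_sol (c + h) T - trig_sol c T) / h - trig_sol_jac c T) with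
    ((trig_sol (c + h) T - trig_sol c T - h * trig_sol_jac c T) / h) by (field; auto).
  unfold Rdiv. rewrite Rabs_mult, Rabs_inv.
  apply Rle_lt_trans with (h ^ 2 * W * / Rabs h).
  { apply Rmult_le_compat_r; [left; apply Rinv_0_lt_compat|]; auto. }
  rewrite <- pow2_abs. simpl. rewrite Rmult_1_r.
  replace (Rabs h * Rabs h * W * / Rabs h) with (Rabs h * W) by (field; lra).
  apply Rlt_le_trans with (eps / W * W); [apply Rmult_lt_compat_r; auto | right; field; lra].
Qed.

End TrigODE.

(** * The bicycle equation *)

Lemma smooth_is_derive f t : smooth f -> is_derive f t (Derive f t).
Proof. intros H. apply Derive_correct, (H 1%nat t). Qed.

Lemma smooth_is_derive2 f t : smooth f -> is_derive (Derive f) t (Derive (Derive f) t).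
Proof. intros H. apply Derive_correct, (H 2%nat t). Qed.

Lemma smooth_continuous_Derive f : smooth f -> continuous_R (Derive f).
Proof.
  intros H. apply (continuous_R_of_is_derive _ (Derive (Derive f))).
  intros; apply smooth_is_derive2, H.
Qed.

Lemma Derive_periodic f T : smooth f -> (forall t, f (t + T) = f t) -> Derive f T = Derive f 0.
Proof.
  intros Hs Hp. symmetry. apply is_derive_unique.
  assert (H : is_derive (fun s => f (s + T)) 0 (Derive f T)).
  { eapply is_derive_eq_val.
    - apply (is_derive_comp f (fun s => s + T) 0 (Derive f T) 1).
      + rewrite Rplus_0_l. apply smooth_is_derive, Hs.
      + eapply is_derive_eq_val;
          [apply is_derive_plus_R; [apply is_derive_id_R | apply is_derive_const_R] | ring].
    - unfold scal; simpl; unfold mult; simpl; ring. }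
  eapply is_derive_ext; [|exact H]. intros s; apply Hp.
Qed.

(* In the angle coordinate [th] of [RF], the bicycle equation reads
   [l th' = y' cos th - x' sin th]. *)
Definition bicycle_A (y : R -> R) (l : R) := fun t => Derive y t / l.
Definition bicycle_B (x : R -> R) (l : R) := fun t => - Derive x t / l.

Section Bicycle.

Variables (x y : R -> R) (l : R).
Hypotheses (Hx : smooth x) (Hy : smooth y) (Hl : 0 < l).

Lemma continuous_bicycle_A : continuous_R (bicycle_A y l).
Proof.
  apply (continuous_R_mult (Derive y) (fun _ => / l));
    [apply smooth_continuous_Derive, Hy | intros t; apply continuous_const].
Qed.

Lemma continuous_bicycle_B : continuous_R (bicycle_B x l).
Proof.
  apply (continuous_R_mult (fun t => - Derive x t) (fun _ => / l));
    [apply continuous_R_opp, smooth_continuous_Derive, Hx | intros t; apply continuous_const].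
Qed.

Lemma is_derive_rear_x th t dth : is_derive th t dth ->
  is_derive (rear_x x l th) t (Derive x t + l * sin (th t) * dth).
Proof.
  intros Hth. unfold rear_x. eapply is_derive_eq_val.
  - apply is_derive_minus_R; [apply smooth_is_derive, Hx|].
    apply (is_derive_scal (fun t => cos (th t))), is_derive_cos_comp, Hth.
  - ring.
Qed.

Lemma is_derive_rear_y th t dth : is_derive th t dth ->
  is_derive (rear_y y l th) t (Derive y t - l * cos (th t) * dth).
Proof.
  intros Hth. unfold rear_y. eapply is_derive_eq_val.
  - apply is_derive_minus_R; [apply smooth_is_derive, Hy|].
    apply (is_derive_scal (fun t => sin (th t))), is_derive_sin_comp, Hth.
  - ring.
Qed.

Lemma bicycle_motion_trig_sol th :
  bicycle_motion x y l th <-> is_trig_sol (bicycle_A y l) (bicycle_B x l) th.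
Proof.
  split.
  - intros [Hd He] t.
    pose proof (Derive_correct th t (Hd t)) as Ht.
    specialize (He t).
    rewrite (is_derive_unique _ _ _ (is_derive_rear_x th t _ Ht)),
      (is_derive_unique _ _ _ (is_derive_rear_y th t _ Ht)) in He.
    eapply is_derive_eq_val; [exact Ht|]. unfold trig_field, bicycle_A, bicycle_B.
    pose proof (sin2_cos2 (th t)) as Hsc. unfold Rsqr in Hsc.
    apply (Rmult_eq_reg_l l); [|lra].
    replace (l * Derive th t)
      with (l * Derive th t * (sin (th t) * sin (th t) + cos (th t) * cos (th t))) by (rewrite Hsc; ring).
    field_simplify; [|lra]. nra.
  - intros Hs. split; [intros t; eexists; apply Hs|].
    intros t. rewrite (is_derive_unique _ _ _ (is_derive_rear_x th t _ (Hs t))),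
      (is_derive_unique _ _ _ (is_derive_rear_y th t _ (Hs t))).
    unfold trig_field, bicycle_A, bicycle_B.
    pose proof (sin2_cos2 (th t)) as Hsc. unfold Rsqr in Hsc.
    set (sn := sin (th t)) in *. set (cs := cos (th t)) in *.
    match goal with |- ?e = 0 =>
      replace e with ((Derive y t * cs - Derive x t * sn) * (sn * sn + cs * cs - 1)) by (field; lra) end.
    rewrite Hsc. ring.
Qed.

Lemma monodromy_trig_sol T :
  monodromy x y l T = fun c => trig_sol (bicycle_A y l) (bicycle_B x l) c T.
Proof.
  pose proof continuous_bicycle_A as HA. pose proof continuous_bicycle_B as HB.
  apply functional_extensionality. intros c. unfold monodromy.
  destruct (trig_sol_spec _ _ HA HB c) as [H0 Hs].
  assert (Hex : exists th1, monodromy_rel x y l T c th1).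
  { eexists. exists (trig_sol (bicycle_A y l) (bicycle_B x l) c).
    split; [apply bicycle_motion_trig_sol, Hs | split; [exact H0 | reflexivity]]. }
  destruct (epsilon_spec (inhabits 0) (fun th1 => monodromy_rel x y l T c th1) Hex)
    as [th [Hb [Hth0 HthT]]].
  rewrite <- HthT. apply (trig_sol_unique _ _ HA HB th _ 0 T); auto.
  - apply bicycle_motion_trig_sol, Hb.
  - congruence.
Qed.

End Bicycle.

(** * Angles modulo [2 PI] *)

Lemma cos_add_2PI_IZR u k : cos (u + 2 * PI * IZR k) = cos u.
Proof.
  destruct k as [|p|p].
  - simpl. f_equal; ring.
  - replace (IZR (Z.pos p)) with (INR (Pos.to_nat p))
      by (rewrite INR_IZR_INZ, positive_nat_Z; reflexivity).
    rewrite <- (cos_period u (Pos.to_nat p)). f_equal; ring.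
  - rewrite <- (cos_period (u + 2 * PI * IZR (Z.neg p)) (Pos.to_nat p)). f_equal.
    replace (IZR (Z.neg p)) with (- INR (Pos.to_nat p))
      by (rewrite INR_IZR_INZ, positive_nat_Z, <- Pos2Z.opp_pos, opp_IZR; reflexivity). ring.
Qed.

Lemma sin_add_2PI_IZR u k : sin (u + 2 * PI * IZR k) = sin u.
Proof.
  destruct k as [|p|p].
  - simpl. f_equal; ring.
  - replace (IZR (Z.pos p)) with (INR (Pos.to_nat p))
      by (rewrite INR_IZR_INZ, positive_nat_Z; reflexivity).
    rewrite <- (sin_period u (Pos.to_nat p)). f_equal; ring.
  - rewrite <- (sin_period (u + 2 * PI * IZR (Z.neg p)) (Pos.to_nat p)). f_equal.
    replace (IZR (Z.neg p)) with (- INR (Pos.to_nat p))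
      by (rewrite INR_IZR_INZ, positive_nat_Z, <- Pos2Z.opp_pos, opp_IZR; reflexivity). ring.
Qed.

Lemma reduce_mod_2PI z a : exists n, a <= z - 2 * PI * IZR n < a + 2 * PI.
Proof.
  exists (Int_part ((z - a) / (2 * PI))). pose proof PI_RGT_0.
  destruct (base_Int_part ((z - a) / (2 * PI))) as [H1 H2].
  set (n := IZR (Int_part ((z - a) / (2 * PI)))) in *.
  assert (E : (z - a) / (2 * PI) * (2 * PI) = z - a) by (field; lra).
  split; nra.
Qed.

Lemma eq_of_eq_mod_2PI a u v k : a <= u < a + 2 * PI -> a <= v < a + 2 * PI ->
  u = v + 2 * PI * IZR k -> u = v.
Proof.
  intros Hu Hv E. pose proof PI_RGT_0.
  assert (- 1 < IZR k < 1) as [H1 H2] by (split; apply (Rmult_lt_reg_l (2 * PI)); nra).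
  apply lt_IZR in H1. apply lt_IZR in H2.
  assert (Hk : k = 0%Z) by lia. rewrite Hk in E. simpl in E. lra.
Qed.

Lemma cos_pos_window u : - (PI / 2) <= u < 3 * (PI / 2) -> 0 < cos u -> - (PI / 2) < u < PI / 2.
Proof.
  intros Hu Hc. split.
  - destruct (Req_dec u (- (PI / 2))) as [->|]; [rewrite cos_neg, cos_PI2 in Hc|]; lra.
  - apply Rnot_le_lt. intros Hge. pose proof (cos_le_0 u Hge ltac:(lra)). lra.
Qed.

Lemma cos_neg_window u : - (PI / 2) < u < 5 * (PI / 2) -> cos u < 0 -> PI / 2 < u < 3 * (PI / 2).
Proof.
  intros Hu Hc. pose proof PI_RGT_0. split; apply Rnot_le_lt; intros Hle.
  - pose proof (cos_ge_0 u ltac:(lra) Hle). lra.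
  - rewrite <- (cos_add_2PI_IZR u (-1)) in Hc.
    pose proof (cos_ge_0 (u + 2 * PI * IZR (-1))). simpl in *. lra.
Qed.

Lemma polar_form X0 Y0 : 0 < X0 ^ 2 + Y0 ^ 2 ->
  exists al, X0 = sqrt (X0 ^ 2 + Y0 ^ 2) * cos al /\ Y0 = sqrt (X0 ^ 2 + Y0 ^ 2) * sin al.
Proof.
  intros Hv. set (V := sqrt (X0 ^ 2 + Y0 ^ 2)).
  assert (HV : 0 < V) by (apply sqrt_lt_R0; auto).
  assert (HV2 : V * V = X0 ^ 2 + Y0 ^ 2) by (apply sqrt_sqrt; lra).
  set (z := X0 / V).
  assert (Hz : -1 <= z <= 1).
  { unfold z. assert (X0 ^ 2 <= V * V) by (pose proof (pow2_ge_0 Y0); lra).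
    split.
    - apply (Rmult_le_reg_r V); auto. unfold Rdiv. rewrite Rmult_assoc, Rinv_l, Rmult_1_r by lra. nra.
    - apply (Rmult_le_reg_r V); auto. unfold Rdiv. rewrite Rmult_assoc, Rinv_l, Rmult_1_r by lra. nra. }
  assert (Hs : sqrt (1 - z²) = Rabs Y0 / V).
  { rewrite <- (sqrt_Rsqr (Rabs Y0 / V)). f_equal. unfold Rsqr, z.
    replace (Rabs Y0 / V * (Rabs Y0 / V)) with ((Rabs Y0 * Rabs Y0) / (V * V)) by (field; lra).
    rewrite <- Rabs_mult, Rabs_pos_eq by nra.
    replace (X0 / V * (X0 / V)) with (X0 * X0 / (V * V)) by (field; lra). rewrite HV2. field. lra.
    apply Rdiv_le_0_compat; auto. apply Rabs_pos. }
  destruct (Rle_or_lt 0 Y0) as [HY|HY].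
  - exists (acos z). rewrite cos_acos, sin_acos by auto. rewrite Hs. rewrite Rabs_pos_eq by auto.
    unfold z. split; field; lra.
  - exists (- acos z). rewrite cos_neg, sin_neg, cos_acos, sin_acos by auto.
    rewrite Hs, Rabs_left by auto.
    unfold z. split; field; lra.
Qed.

(** * Hyperbolicity of the monodromy *)

(* With [F' = (vX, vY)] orthogonal to [(cs, sn)], the rate of change of the projection of [F']
   on [(cs, sn)] is [F''.(cs, sn) + |F'|^2 / l]; the first term is at least [- k |F'|^2]
   by the curvature bound, so it is positive when [l k < 1]. *)
Lemma front_proj_growth (vX vY vX2 vY2 cs sn k l : R) :
  sn * sn + cs * cs = 1 -> 0 < vX ^ 2 + vY ^ 2 -> 0 < l -> 0 < k -> l * k < 1 ->
  vX * cs + vY * sn = 0 ->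
  Rabs (vX * vY2 - vY * vX2) <= k * ((vX ^ 2 + vY ^ 2) * sqrt (vX ^ 2 + vY ^ 2)) ->
  0 < vX2 * cs + vX * (- sn * (vY / l * cs + - vX / l * sn))
      + (vY2 * sn + vY * (cs * (vY / l * cs + - vX / l * sn))).
Proof.
  intros Hcs Hv Hl Hk Hlk Hw Hcb.
  set (v2 := vX ^ 2 + vY ^ 2) in *.
  set (S := sqrt v2) in *. assert (HS : 0 < S) by (apply sqrt_lt_R0; auto).
  assert (HS2 : S * S = v2) by (apply sqrt_sqrt; lra).
  set (q := vY * cs - vX * sn). set (z := vX2 * cs + vY2 * sn). set (m := vX2 * vY - vX * vY2).
  assert (Hq2 : q * q = v2).
  { unfold q, v2.
    replace ((vY * cs - vX * sn) * (vY * cs - vX * sn)) with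
      ((vX ^ 2 + vY ^ 2) * (sn * sn + cs * cs) - (vX * cs + vY * sn) * (vX * cs + vY * sn)) by ring.
    rewrite Hw, Hcs. ring. }
  assert (Hz : v2 * z = q * m).
  { unfold z, q, m, v2.
    replace ((vX ^ 2 + vY ^ 2) * (vX2 * cs + vY2 * sn)) with
      ((vX * cs + vY * sn) * (vX * vX2 + vY * vY2) + (vY * cs - vX * sn) * (vX2 * vY - vY2 * vX))
      by ring.
    rewrite Hw. ring. }
  assert (Hq : Rabs q = S).
  { assert (Rabs q * Rabs q = S * S) by (rewrite <- Rabs_mult, Hq2, HS2; apply Rabs_pos_eq; lra).
    pose proof (Rabs_pos q). nra. }
  assert (Hm : Rabs m <= k * (v2 * S)).
  { unfold m. replace (vX2 * vY - vX * vY2) with (- (vX * vY2 - vY * vX2)) by ring.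
    rewrite Rabs_Ropp. exact Hcb. }
  assert (Hzb : v2 * Rabs z <= k * v2 * v2).
  { replace (v2 * Rabs z) with (Rabs (v2 * z)) by (rewrite Rabs_mult, (Rabs_pos_eq v2); lra).
    rewrite Hz, Rabs_mult, Hq. replace (k * v2 * v2) with (S * (k * (v2 * S))) by (rewrite <- HS2; ring).
    apply Rmult_le_compat_l; lra. }
  assert (Hz2 : - (k * v2) <= z).
  { assert (Rabs z <= k * v2) by (apply (Rmult_le_reg_l v2); auto; lra).
    apply Rabs_le_between in H. lra. }
  replace (vX2 * cs + vX * (- sn * (vY / l * cs + - vX / l * sn))
           + (vY2 * sn + vY * (cs * (vY / l * cs + - vX / l * sn))))
    with (z + q * q / l) by (unfold z, q; field; lra).
  rewrite Hq2. assert (v2 / l > k * v2).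
  { apply (Rmult_lt_reg_l l); auto. replace (l * (v2 / l)) with v2 by (field; lra). nra. }
  lra.
Qed.

Section CurvatureBound.

Variables (x y : R -> R) (T l k : R).
Hypotheses (Hx : smooth x) (Hy : smooth y) (HT : 0 < T)
  (Hper : forall t, x (t + T) = x t /\ y (t + T) = y t)
  (Hreg : forall t, Derive x t <> 0 \/ Derive y t <> 0)
  (Hl : 0 < l) (Hk : 0 < k) (Hlk : l * k < 1) (Hcurv : forall t, curvature x y t <= k).

Local Notation A := (bicycle_A y l).
Local Notation B := (bicycle_B x l).
Local Notation th := (trig_sol A B).

Let HA : continuous_R A := continuous_bicycle_A y l Hy.
Let HB : continuous_R B := continuous_bicycle_B x l Hx.

Definition lift c := th c T.

(* Projection of the front wheel velocity on the direction of [RF]. *)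
Definition front_proj c t := Derive x t * cos (th c t) + Derive y t * sin (th c t).

Definition front_proj_deriv c t :=
  Derive (Derive x) t * cos (th c t)
  + Derive x t * (- sin (th c t) * trig_field A B t (th c t))
  + (Derive (Derive y) t * sin (th c t)
     + Derive y t * (cos (th c t) * trig_field A B t (th c t))).

Definition front_proj0 c := Derive x 0 * cos c + Derive y 0 * sin c.

Lemma speed_sqr_pos t : 0 < Derive x t ^ 2 + Derive y t ^ 2.
Proof.
  pose proof (pow2_ge_0 (Derive x t)). pose proof (pow2_ge_0 (Derive y t)).
  destruct (Hreg t) as [Hne|Hne]; pose proof (pow2_gt_0 _ Hne); lra.
Qed.

Lemma th_spec c : th c 0 = c /\ is_trig_sol A B (th c).
Proof. exact (trig_sol_spec A B HA HB c). Qed.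

Lemma is_derive_front_proj c t : is_derive (front_proj c) t (front_proj_deriv c t).
Proof.
  destruct (th_spec c) as [_ Hs]. unfold front_proj, front_proj_deriv. apply is_derive_plus_R.
  - eapply is_derive_eq_val.
    + apply (is_derive_mult_R (Derive x) (fun t => cos (th c t)));
        [apply smooth_is_derive2, Hx | apply is_derive_cos_comp, Hs].
    + ring.
  - eapply is_derive_eq_val.
    + apply (is_derive_mult_R (Derive y) (fun t => sin (th c t)));
        [apply smooth_is_derive2, Hy | apply is_derive_sin_comp, Hs].
    + ring.
Qed.

Lemma curvature_numerator_le t :
  Rabs (Derive x t * Derive (Derive y) t - Derive y t * Derive (Derive x) t) <=
  k * ((Derive x t ^ 2 + Derive y t ^ 2) * sqrt (Derive x t ^ 2 + Derive y t ^ 2)).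
Proof.
  pose proof (Hcurv t) as Hc. unfold curvature in Hc. cbv zeta in Hc.
  change (Derive_n y 2 t) with (Derive (Derive y) t) in Hc.
  change (Derive_n x 2 t) with (Derive (Derive x) t) in Hc.
  pose proof (speed_sqr_pos t) as Hv. pose proof (sqrt_lt_R0 _ Hv).
  set (N := (Derive x t ^ 2 + Derive y t ^ 2) * sqrt (Derive x t ^ 2 + Derive y t ^ 2)) in *.
  assert (HN : 0 < N) by (apply Rmult_lt_0_compat; auto).
  unfold Rdiv in Hc. apply (Rmult_le_compat_r N) in Hc; [|lra].
  rewrite Rmult_assoc, Rinv_l, Rmult_1_r in Hc; lra.
Qed.

Lemma front_proj_deriv_pos_at_zero c t : front_proj c t = 0 -> 0 < front_proj_deriv c t.
Proof.
  intros Hw. unfold front_proj, front_proj_deriv in *. unfold trig_field, bicycle_A, bicycle_B.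
  apply (front_proj_growth _ _ _ _ _ _ k l); auto.
  - pose proof (sin2_cos2 (th c t)) as H. unfold Rsqr in H; auto.
  - apply speed_sqr_pos.
  - apply curvature_numerator_le.
Qed.

Lemma front_proj_pos_after c s t : s < t -> 0 <= front_proj c s -> 0 < front_proj c t.
Proof.
  apply (pos_of_deriv_pos_at_zeros (front_proj c) (front_proj_deriv c)).
  - apply is_derive_front_proj.
  - apply front_proj_deriv_pos_at_zero.
Qed.

Lemma front_proj_0 c : front_proj c 0 = front_proj0 c.
Proof. unfold front_proj, front_proj0. rewrite (proj1 (th_spec c)). reflexivity. Qed.

Lemma front_proj_T c : front_proj c T = front_proj0 (lift c).
Proof.
  unfold front_proj, front_proj0, lift.
  rewrite (Derive_periodic x T), (Derive_periodic y T); auto; intros t; apply Hper.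
Qed.

Lemma front_proj0_add_2PI_IZR c n : front_proj0 (c + 2 * PI * IZR n) = front_proj0 c.
Proof. unfold front_proj0. rewrite cos_add_2PI_IZR, sin_add_2PI_IZR. reflexivity. Qed.

Lemma front_proj0_lift_pos c : 0 <= front_proj0 c -> 0 < front_proj0 (lift c).
Proof.
  intros Hc. rewrite <- front_proj_T. apply (front_proj_pos_after c 0); [lra|].
  now rewrite front_proj_0.
Qed.

Lemma is_derive_lift c : is_derive lift c (trig_sol_jac A B c T).
Proof. exact (is_derive_trig_sol_init A B HA HB T c HT). Qed.

Lemma trig_sol_var_front_proj c s : trig_sol_var A B c s = - front_proj c s / l.
Proof. unfold trig_sol_var, trig_field_dth, front_proj, bicycle_A, bicycle_B. field. lra. Qed.

Lemma is_derive_RInt_trig_sol_var c t :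
  is_derive (fun t => RInt (trig_sol_var A B c) 0 t) t (trig_sol_var A B c t).
Proof. apply is_derive_RInt_0, continuous_trig_sol_var; auto. Qed.

Lemma lift_jac_lt_1 c : 0 <= front_proj0 c -> trig_sol_jac A B c T < 1.
Proof.
  intros Hc. unfold trig_sol_jac. rewrite <- exp_0. apply exp_increasing.
  enough (RInt (trig_sol_var A B c) 0 T < RInt (trig_sol_var A B c) 0 0)
    by (rewrite RInt_point in H; exact H).
  apply (deriv_neg_lt (fun t => RInt (trig_sol_var A B c) 0 t) (trig_sol_var A B c)); auto.
  - intros s _. apply is_derive_RInt_trig_sol_var.
  - intros s Hs. rewrite trig_sol_var_front_proj.
    assert (0 < front_proj c s) by (apply (front_proj_pos_after c 0); [lra | now rewrite front_proj_0]).
    assert (0 < front_proj c s / l) by (apply Rdiv_lt_0_compat; auto). lra.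
Qed.

Lemma lift_jac_gt_1 c : front_proj0 (lift c) <= 0 -> 1 < trig_sol_jac A B c T.
Proof.
  intros Hc. unfold trig_sol_jac. rewrite <- exp_0. apply exp_increasing.
  enough (- RInt (trig_sol_var A B c) 0 T < - RInt (trig_sol_var A B c) 0 0)
    by (rewrite RInt_point in H; unfold zero in H; simpl in H; lra).
  apply (deriv_neg_lt (fun t => - RInt (trig_sol_var A B c) 0 t) (fun t => - trig_sol_var A B c t));
    auto.
  - intros s _. apply is_derive_opp_R, is_derive_RInt_trig_sol_var.
  - intros s Hs. rewrite trig_sol_var_front_proj.
    assert (front_proj c s < 0).
    { apply Rnot_le_lt. intros Hge.
      pose proof (front_proj_pos_after c s T ltac:(lra) Hge). rewrite front_proj_T in H. lra. }
    assert (front_proj c s / l < 0) by (apply Rdiv_neg_pos; auto).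
    lra.
Qed.

Lemma lift_add_2PI_IZR c n : lift (c + 2 * PI * IZR n) = lift c + 2 * PI * IZR n.
Proof.
  destruct (th_spec c) as [H0 Hs]. destruct (th_spec (c + 2 * PI * IZR n)) as [H0' Hs'].
  unfold lift. apply (trig_sol_unique A B HA HB _ (fun t => th c t + 2 * PI * IZR n) 0 T); auto.
  - intros t. eapply is_derive_eq_val.
    + apply is_derive_plus_R; [apply Hs | apply is_derive_const_R].
    + unfold trig_field. rewrite cos_add_2PI_IZR, sin_add_2PI_IZR. ring.
  - now rewrite H0, H0'.
Qed.

Lemma lift_continuity : continuity lift.
Proof.
  intros c. apply derivable_continuous_pt. exists (trig_sol_jac A B c T).
  apply is_derive_Reals, is_derive_lift.
Qed.

(* Solutions of a first order equation cannot cross. *)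
Lemma lift_increasing c1 c2 : c1 < c2 -> lift c1 < lift c2.
Proof.
  intros Hc. destruct (th_spec c1) as [H1 Hs1]. destruct (th_spec c2) as [H2 Hs2].
  apply Rnot_le_lt. intros Hle.
  set (D := fun t => th c2 t - th c1 t).
  assert (HD : continuity D).
  { intros t. apply continuity_pt_minus; apply continuity_pt_filterlim;
      apply (continuous_R_of_is_derive _ _ Hs2) || apply (continuous_R_of_is_derive _ _ Hs1). }
  destruct (IVT_gen D 0 T 0 HD) as [s [Hs HDs]].
  { unfold D, lift in *. rewrite H1, H2, Rmin_right, Rmax_left; lra. }
  assert (Heq : th c2 0 = th c1 0)
    by (apply (trig_sol_unique A B HA HB _ _ s 0); auto; unfold D in HDs; lra).
  rewrite H1, H2 in Heq. lra.
Qed.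

Lemma lift_le c1 c2 : c1 <= c2 -> lift c1 <= lift c2.
Proof. intros [Hlt| ->]; [left; apply lift_increasing, Hlt | right; reflexivity]. Qed.

Lemma lift_sub_id_decreasing u v : u < v -> (forall c, u <= c <= v -> 0 <= front_proj0 c) ->
  lift v - v < lift u - u.
Proof.
  intros Huv Hw.
  apply (deriv_neg_lt (fun c => lift c - c) (fun c => trig_sol_jac A B c T - 1)); auto.
  - intros c _. apply is_derive_minus_R; [apply is_derive_lift | apply is_derive_id_R].
  - intros c Hc. pose proof (lift_jac_lt_1 c (Hw c ltac:(lra))). lra.
Qed.

Lemma lift_sub_id_increasing u v : u < v -> (forall c, u <= c <= v -> front_proj0 (lift c) <= 0) ->
  lift u - u < lift v - v.
Proof.
  intros Huv Hw. enough (- (lift v - v) < - (lift u - u)) by lra.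
  apply (deriv_neg_lt (fun c => - (lift c - c)) (fun c => - (trig_sol_jac A B c T - 1))); auto.
  - intros c _. apply is_derive_opp_R, is_derive_minus_R; [apply is_derive_lift | apply is_derive_id_R].
  - intros c Hc. pose proof (lift_jac_gt_1 c (Hw c ltac:(lra))). lra.
Qed.

Lemma front_proj0_polar : exists al V, 0 < V /\ forall c, front_proj0 c = V * cos (c - al).
Proof.
  destruct (polar_form _ _ (speed_sqr_pos 0)) as [al [HX HY]].
  set (V := sqrt (Derive x 0 ^ 2 + Derive y 0 ^ 2)) in *.
  exists al, V. split; [apply sqrt_lt_R0, speed_sqr_pos|].
  intros c. unfold front_proj0. rewrite cos_minus.
  transitivity (V * cos al * cos c + V * sin al * sin c); [rewrite <- HX, <- HY|]; ring.
Qed.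

Lemma fixed_front_proj0_neq_0 c m : lift c = c + 2 * PI * IZR m -> front_proj0 c <> 0.
Proof.
  intros Hm H0. pose proof (front_proj0_lift_pos c (Req_le _ _ (eq_sym H0))) as Hpos.
  rewrite Hm, front_proj0_add_2PI_IZR in Hpos. lra.
Qed.

Section FixedPoints.

Variables (al V : R).
Hypotheses (HV : 0 < V) (Hpolar : forall c, front_proj0 c = V * cos (c - al)).

Lemma front_proj0_mod_2PI z n : front_proj0 z = V * cos (z - 2 * PI * IZR n - al).
Proof.
  rewrite <- (front_proj0_add_2PI_IZR z (- n)), Hpolar, opp_IZR. f_equal. f_equal. ring.
Qed.

Lemma front_proj0_left_end : front_proj0 (al - PI / 2) = 0.
Proof.
  rewrite Hpolar. replace (al - PI / 2 - al) with (- (PI / 2)) by ring.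
  rewrite cos_neg, cos_PI2. ring.
Qed.

Lemma front_proj0_right_end : front_proj0 (al + PI / 2) = 0.
Proof. rewrite Hpolar. replace (al + PI / 2 - al) with (PI / 2) by ring. rewrite cos_PI2. ring. Qed.

Lemma front_proj0_nonneg_arc c : al - PI / 2 <= c <= al + PI / 2 -> 0 <= front_proj0 c.
Proof. intros Hc. rewrite Hpolar. apply Rmult_le_pos; [lra|]. apply cos_ge_0; lra. Qed.

Lemma front_proj0_pos_arc c : al - PI / 2 < c < al + PI / 2 -> 0 < front_proj0 c.
Proof. intros Hc. rewrite Hpolar. apply Rmult_lt_0_compat; [lra|]. apply cos_gt_0; lra. Qed.

Lemma front_proj0_neg_arc c : al + PI / 2 < c < al + 3 * (PI / 2) -> front_proj0 c < 0.
Proof. intros Hc. rewrite Hpolar. apply Rmult_pos_neg; [lra|]. apply cos_lt_0; lra. Qed.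

(* The arc [front_proj0 >= 0] is mapped into a single translate of itself: its image avoids the
   zeros of [front_proj0], since [front_proj0] is positive after one turn. *)
Lemma lift_window : exists kk,
  al - PI / 2 + 2 * PI * IZR kk < lift (al - PI / 2) /\
  lift (al + PI / 2) < al + PI / 2 + 2 * PI * IZR kk.
Proof.
  pose proof PI_RGT_0.
  assert (HL : 0 < front_proj0 (lift (al - PI / 2)))
    by (apply front_proj0_lift_pos; rewrite front_proj0_left_end; lra).
  destruct (reduce_mod_2PI (lift (al - PI / 2)) (al - PI / 2)) as [kk Hkk].
  rewrite (front_proj0_mod_2PI _ kk) in HL.
  assert (Hu := cos_pos_window (lift (al - PI / 2) - 2 * PI * IZR kk - al) ltac:(lra) ltac:(nra)).
  exists kk. split; [lra|]. apply Rnot_le_lt. intros Hge.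
  assert (Hlr : lift (al - PI / 2) < lift (al + PI / 2)) by (apply lift_increasing; lra).
  destruct (IVT_gen lift (al - PI / 2) (al + PI / 2) (al + PI / 2 + 2 * PI * IZR kk) lift_continuity)
    as [cs [Hcs Hmc]].
  { rewrite Rmin_left, Rmax_right; lra. }
  rewrite Rmin_left, Rmax_right in Hcs by lra.
  pose proof (front_proj0_lift_pos cs (front_proj0_nonneg_arc cs Hcs)) as Hpos.
  rewrite Hmc, front_proj0_add_2PI_IZR, front_proj0_right_end in Hpos. lra.
Qed.

Section Window.

Variable kk : Z.
Hypotheses (Hlo : al - PI / 2 + 2 * PI * IZR kk < lift (al - PI / 2))
           (Hhi : lift (al + PI / 2) < al + PI / 2 + 2 * PI * IZR kk).

Lemma lift_add_2PI c : lift (c + 2 * PI) = lift c + 2 * PI.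
Proof.
  replace (c + 2 * PI) with (c + 2 * PI * IZR 1) by (simpl; ring).
  rewrite lift_add_2PI_IZR. simpl. ring.
Qed.

Lemma attracting_fixed_exists :
  exists a, al - PI / 2 < a < al + PI / 2 /\ lift a = a + 2 * PI * IZR kk.
Proof.
  pose proof PI_RGT_0.
  set (F := fun c => lift c - c - 2 * PI * IZR kk).
  assert (HF : continuity F).
  { intros c. apply continuity_pt_minus; [apply continuity_pt_minus|]; auto.
    - apply lift_continuity.
    - apply derivable_continuous_pt, derivable_pt_id.
    - apply continuity_pt_const. intros u v; reflexivity. }
  destruct (IVT_gen F (al - PI / 2) (al + PI / 2) 0 HF) as [a [Ha HFa]].
  { unfold F. rewrite Rmin_right, Rmax_left; lra. }
  rewrite Rmin_left, Rmax_right in Ha by lra.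
  exists a. unfold F in HFa. split; [|lra].
  split; apply Rnot_le_lt; intros Hle.
  - replace a with (al - PI / 2) in HFa by lra. lra.
  - replace a with (al + PI / 2) in HFa by lra. lra.
Qed.

Lemma repelling_fixed_exists :
  exists b, al + PI / 2 < b < al + 3 * (PI / 2) /\ lift b = b + 2 * PI * IZR kk.
Proof.
  pose proof PI_RGT_0.
  set (F := fun c => lift c - c - 2 * PI * IZR kk).
  assert (HF : continuity F).
  { intros c. apply continuity_pt_minus; [apply continuity_pt_minus|]; auto.
    - apply lift_continuity.
    - apply derivable_continuous_pt, derivable_pt_id.
    - apply continuity_pt_const. intros u v; reflexivity. }
  assert (HFL : F (al - PI / 2 + 2 * PI) = F (al - PI / 2)) by (unfold F; rewrite lift_add_2PI; ring).
  replace (al + 3 * (PI / 2)) with (al - PI / 2 + 2 * PI) by field.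
  destruct (IVT_gen F (al + PI / 2) (al - PI / 2 + 2 * PI) 0 HF) as [b [Hb HFb]].
  { rewrite HFL. unfold F. rewrite Rmin_left, Rmax_right; lra. }
  rewrite Rmin_left, Rmax_right in Hb by lra.
  exists b. unfold F in HFb, HFL. split; [|lra].
  split; apply Rnot_le_lt; intros Hle.
  - replace b with (al + PI / 2) in HFb by lra. lra.
  - replace b with (al - PI / 2 + 2 * PI) in HFb by lra. lra.
Qed.

Lemma fixed_pos_arc_turn c m : al - PI / 2 < c < al + PI / 2 -> lift c = c + 2 * PI * IZR m ->
  lift c = c + 2 * PI * IZR kk.
Proof.
  intros Hc Hm. pose proof PI_RGT_0.
  pose proof (lift_increasing (al - PI / 2) c ltac:(lra)).
  pose proof (lift_increasing c (al + PI / 2) ltac:(lra)).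
  enough (lift c - 2 * PI * IZR kk = c) by lra.
  apply (eq_of_eq_mod_2PI (al - PI / 2) _ _ (m - kk)); [lra | lra|].
  rewrite minus_IZR. lra.
Qed.

Lemma fixed_neg_arc_turn c m : al + PI / 2 < c < al + 3 * (PI / 2) ->
  lift c = c + 2 * PI * IZR m -> lift c = c + 2 * PI * IZR kk.
Proof.
  intros Hc Hm. pose proof PI_RGT_0.
  pose proof (lift_increasing (al + PI / 2) c ltac:(lra)).
  pose proof (lift_increasing (al - PI / 2) (al + PI / 2) ltac:(lra)).
  pose proof (lift_increasing c (al - PI / 2 + 2 * PI) ltac:(lra)).
  rewrite lift_add_2PI in H2.
  assert (Hneg : front_proj0 (lift c) < 0)
    by (rewrite Hm, front_proj0_add_2PI_IZR; apply front_proj0_neg_arc, Hc).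
  rewrite (front_proj0_mod_2PI _ kk) in Hneg.
  assert (Hu := cos_neg_window (lift c - 2 * PI * IZR kk - al) ltac:(lra) ltac:(nra)).
  enough (lift c - 2 * PI * IZR kk = c) by lra.
  apply (eq_of_eq_mod_2PI (al + PI / 2) _ _ (m - kk)); [lra | lra|].
  rewrite minus_IZR. lra.
Qed.

Lemma attracting_fixed_unique a c : al - PI / 2 < a < al + PI / 2 -> al - PI / 2 < c < al + PI / 2 ->
  lift a = a + 2 * PI * IZR kk -> lift c = c + 2 * PI * IZR kk -> c = a.
Proof.
  intros Ha Hc Hma Hmc.
  destruct (Rtotal_order c a) as [Hlt|[Heq|Hgt]]; auto; exfalso.
  - pose proof (lift_sub_id_decreasing c a Hlt ltac:(intros; apply front_proj0_nonneg_arc; lra)). lra.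
  - pose proof (lift_sub_id_decreasing a c Hgt ltac:(intros; apply front_proj0_nonneg_arc; lra)). lra.
Qed.

Lemma front_proj0_lift_neg_between c1 c2 : al + PI / 2 < c1 < al + 3 * (PI / 2) ->
  al + PI / 2 < c2 < al + 3 * (PI / 2) ->
  lift c1 = c1 + 2 * PI * IZR kk -> lift c2 = c2 + 2 * PI * IZR kk ->
  forall z, c1 <= z <= c2 -> front_proj0 (lift z) <= 0.
Proof.
  intros H1 H2 Hm1 Hm2 z Hz.
  pose proof (lift_le c1 z ltac:(lra)). pose proof (lift_le z c2 ltac:(lra)).
  rewrite (front_proj0_mod_2PI _ kk). apply Rmult_le_0_l; [lra|]. apply cos_le_0; lra.
Qed.

Lemma repelling_fixed_unique b c : al + PI / 2 < b < al + 3 * (PI / 2) ->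
  al + PI / 2 < c < al + 3 * (PI / 2) ->
  lift b = b + 2 * PI * IZR kk -> lift c = c + 2 * PI * IZR kk -> c = b.
Proof.
  intros Hb Hc Hmb Hmc.
  destruct (Rtotal_order c b) as [Hlt|[Heq|Hgt]]; auto; exfalso.
  - pose proof (lift_sub_id_increasing c b Hlt (front_proj0_lift_neg_between c b Hc Hb Hmc Hmb)). lra.
  - pose proof (lift_sub_id_increasing b c Hgt (front_proj0_lift_neg_between b c Hb Hc Hmb Hmc)). lra.
Qed.

Lemma fixed_point_classification a b c m :
  al - PI / 2 < a < al + PI / 2 -> lift a = a + 2 * PI * IZR kk ->
  al + PI / 2 < b < al + 3 * (PI / 2) -> lift b = b + 2 * PI * IZR kk ->
  lift c = c + 2 * PI * IZR m ->
  (exists n, c = a + 2 * PI * IZR n) \/ (exists n, c = b + 2 * PI * IZR n).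
Proof.
  intros Ha Hma Hb Hmb Hmc. pose proof PI_RGT_0.
  destruct (reduce_mod_2PI c (al - PI / 2)) as [n Hn].
  set (ct := c - 2 * PI * IZR n) in *.
  assert (Hct : lift ct = ct + 2 * PI * IZR m).
  { unfold ct. replace (c - 2 * PI * IZR n) with (c + 2 * PI * IZR (- n)) by (rewrite opp_IZR; ring).
    rewrite lift_add_2PI_IZR, Hmc, opp_IZR. ring. }
  pose proof (fixed_front_proj0_neq_0 ct m Hct) as Hne.
  assert (ct <> al - PI / 2) by (intros E; rewrite E, front_proj0_left_end in Hne; auto).
  assert (ct <> al + PI / 2) by (intros E; rewrite E, front_proj0_right_end in Hne; auto).
  destruct (Rlt_or_le ct (al + PI / 2)) as [Hleft|Hright].
  - left. exists n. enough (ct = a) by (unfold ct in *; lra).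
    apply (attracting_fixed_unique a ct Ha ltac:(lra) Hma).
    apply (fixed_pos_arc_turn ct m ltac:(lra) Hct).
  - right. exists n. enough (ct = b) by (unfold ct in *; lra).
    apply (repelling_fixed_unique b ct Hb ltac:(lra) Hmb).
    apply (fixed_neg_arc_turn ct m ltac:(lra) Hct).
Qed.

End Window.

End FixedPoints.

Lemma Rabs_Derive_lift c : Rabs (Derive lift c) = trig_sol_jac A B c T.
Proof.
  rewrite (is_derive_unique _ _ _ (is_derive_lift c)). apply Rabs_pos_eq. left; apply exp_pos.
Qed.

Lemma lift_sub_2PI_IZR_fixed c n kk : lift c = c + 2 * PI * IZR kk ->
  lift (c - 2 * PI * IZR n) = c - 2 * PI * IZR n + 2 * PI * IZR kk.
Proof.
  intros Hc. replace (c - 2 * PI * IZR n) with (c + 2 * PI * IZR (- n)) by (rewrite opp_IZR; ring).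
  rewrite lift_add_2PI_IZR, Hc. ring.
Qed.

Lemma lift_hyperbolic : hyperbolic lift.
Proof.
  pose proof PI_RGT_0.
  destruct front_proj0_polar as [al [V [HV Hpolar]]].
  destruct (lift_window al V HV Hpolar) as [kk [Hlo Hhi]].
  destruct (attracting_fixed_exists al kk Hlo Hhi) as [a [Ha Hma]].
  destruct (repelling_fixed_exists al kk Hlo Hhi) as [b [Hb Hmb]].
  destruct (reduce_mod_2PI a 0) as [na Hna]. destruct (reduce_mod_2PI b 0) as [nb Hnb].
  set (a' := a - 2 * PI * IZR na) in *. set (b' := b - 2 * PI * IZR nb) in *.
  assert (Hma' : lift a' = a' + 2 * PI * IZR kk) by (apply lift_sub_2PI_IZR_fixed, Hma).
  assert (Hmb' : lift b' = b' + 2 * PI * IZR kk) by (apply lift_sub_2PI_IZR_fixed, Hmb).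
  assert (Hpa : 0 < front_proj0 a').
  { unfold a'. rewrite (front_proj0_mod_2PI al V Hpolar _ (- na)), opp_IZR.
    replace (a - 2 * PI * IZR na - 2 * PI * - IZR na) with a by ring.
    rewrite <- Hpolar. apply (front_proj0_pos_arc al V HV Hpolar), Ha. }
  assert (Hpb : front_proj0 b' < 0).
  { unfold b'. rewrite (front_proj0_mod_2PI al V Hpolar _ (- nb)), opp_IZR.
    replace (b - 2 * PI * IZR nb - 2 * PI * - IZR nb) with b by ring.
    rewrite <- Hpolar. apply (front_proj0_neg_arc al V HV Hpolar), Hb. }
  exists a', b'. split; [lra|]. split; [lra|]. split; [intros E; rewrite E in Hpa; lra|].
  split; [exists kk; exact Hma'|]. split; [exists kk; exact Hmb'|].
  split.
  - intros c Hc [m Hm].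
    destruct (fixed_point_classification al V HV Hpolar kk Hlo Hhi a b c m Ha Hma Hb Hmb Hm)
      as [[n Hn]|[n Hn]].
    + left. apply (eq_of_eq_mod_2PI 0 c a' (n + na)); [lra | lra |]. unfold a'. rewrite plus_IZR. lra.
    + right. apply (eq_of_eq_mod_2PI 0 c b' (n + nb)); [lra | lra |]. unfold b'. rewrite plus_IZR. lra.
  - split; [eexists; apply is_derive_lift|]. split; [eexists; apply is_derive_lift|].
    rewrite !Rabs_Derive_lift. split.
    + apply lift_jac_lt_1. lra.
    + apply lift_jac_gt_1. rewrite Hmb', front_proj0_add_2PI_IZR. lra.
Qed.

End CurvatureBound.

Lemma curvature_nonneg x y t : 0 <= curvature x y t.
Proof.
  unfold curvature. cbv zeta. unfold Rdiv. apply Rmult_le_pos; [apply Rabs_pos|].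
  set (v2 := Derive x t ^ 2 + Derive y t ^ 2).
  assert (Hv2 : 0 <= v2)
    by (pose proof (pow2_ge_0 (Derive x t)); pose proof (pow2_ge_0 (Derive y t)); unfold v2; lra).
  assert (Hd : 0 <= v2 * sqrt v2) by (apply Rmult_le_pos; [exact Hv2 | apply sqrt_pos]).
  destruct (Req_dec (v2 * sqrt v2) 0) as [->|Hne]; [rewrite Rinv_0; lra|].
  left. apply Rinv_0_lt_compat. lra.
Qed.

(* [1 / 0 = 0] in Rocq, so [l < 1 / k] with [0 < l] already excludes [k = 0]. *)
Lemma mul_lt_1_of_lt_inv l k : 0 < l -> 0 <= k -> l < 1 / k -> 0 < k /\ l * k < 1.
Proof.
  intros Hl Hk Hlk. destruct (Req_dec k 0) as [->|Hne].
  - unfold Rdiv in Hlk. rewrite Rinv_0, Rmult_0_r in Hlk. lra.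
  - split; [lra|]. apply (Rmult_lt_compat_r k) in Hlk; [|lra].
    unfold Rdiv in Hlk. rewrite Rmult_1_l, Rinv_l in Hlk by lra. exact Hlk.
Qed.

Theorem lemma4p1 (x y : R -> R) (T l : R) :
  smooth_closed_curve x y T ->
  traversed_once x y T ->
  strictly_convex x y ->
  0 < l ->
  (exists kmax : R,
     (forall t, curvature x y t <= kmax) /\
     (exists t0, curvature x y t0 = kmax) /\
     l < 1 / kmax) ->
  hyperbolic (monodromy x y l T).
Proof.
  intros [HT [Hx [Hy [Hper Hreg]]]] _ _ Hl [k [Hcurv [[t0 Ht0] Hlk]]].
  assert (Hk0 : 0 <= k) by (rewrite <- Ht0; apply curvature_nonneg).
  destruct (mul_lt_1_of_lt_inv l k Hl Hk0 Hlk) as [Hk Hlk'].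
  rewrite (monodromy_trig_sol x y l Hx Hy Hl T).
  exact (lift_hyperbolic x y T l k Hx Hy HT Hper Hreg Hl Hk Hlk' Hcurv).
Qed.
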